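(* For any values of $k$ and $\mu$, \[ \,_{2}\tilde{F}_{3}\left(\tfrac{1}{2},\tfrac{1}{2};1,1-\mu,\mu+1;-k^{2}\right)=\sum_{L=0}^{\infty}\frac{(-1)^{2L}k^{4L}\Gamma(2L+1)^{2}2^{-8L}\left(2-\delta_{L0}\right)}{(L!)^{2}} \,_{1}\tilde{F}_{2}\left(L+\tfrac{1}{2};2L+1,L+\mu+1;-\tfrac{k^{2}}{4}\right)\,_{1}\tilde{F}_{2}\left(L+\tfrac{1}{2};2L+1,L-\mu+1;-\tfrac{k^{2}}{4}\right). \]
   Context: $\,_{p}F_{q}(a_1,\dots,a_p;b_1,\dots,b_q;z)=\sum_{n\ge0}\frac{(a_1)_n\cdots(a_p)_n}{(b_1)_n\cdots(b_q)_n}\frac{z^n}{n!}$ is the generalized hypergeometric function, with $(c)_n=\Gamma(c+n)/\Gamma(c)$. The regularized hypergeometric function is $\,_{p}\tilde{F}_{q}(a_1,\dots,a_p;b_1,\dots,b_q;z)=\,_{p}F_{q}(a_1,\dots,a_p;b_1,\dots,b_q;z)/(\Gamma(b_1)\cdots\Gamma(b_q))$ (understood by continuity, as an entire function of the $b_j$, when some $b_j$ is a nonpositive integer). $\delta_{L0}$ is the Kronecker delta. *)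

From Stdlib Require Import Reals List Arith Factorial.
From Coquelicot Require Import Coquelicot.
Open Scope R_scope.

Definition cexp (z : C) : C :=
  (exp (fst z) * cos (snd z), exp (fst z) * sin (snd z)).

Definition npow_c (n : nat) (z : C) : C := cexp (Cmult z (RtoC (ln (INR n)))).

(* Limit of a complex sequence, componentwise (value is meaningful when the
   sequence converges). *)
Definition Clim (u : nat -> C) : C :=
  (real (Lim_seq (fun n => fst (u n))), real (Lim_seq (fun n => snd (u n)))).

Definition CSeries (a : nat -> C) : C := Clim (fun n => sum_n a n).

Fixpoint poch (c : C) (n : nat) : C :=
  match n with
  | O => RtoC 1
  | S m => Cmult (poch c m) (Cplus c (RtoC (INR m)))
  end.

(* Reciprocal Gamma function 1/Gamma(z), an entire function, via Gauss's
   formula 1/Gamma(z) = lim_n z (z+1) ... (z+n) / (n! n^z)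
   (it vanishes at z = 0, -1, -2, ...). *)
Definition rgamma (z : C) : C :=
  Clim (fun n => Cdiv (poch z (S n)) (Cmult (RtoC (INR (Factorial.fact n))) (npow_c n z))).

(* Regularized generalized hypergeometric function
   pF~q(as; bs; z) = sum_n prod_i (a_i)_n / prod_j Gamma(b_j + n) * z^n / n!,
   which equals pFq(as;bs;z)/prod_j Gamma(b_j), extended by continuity. *)
Definition hyp_reg (as_ bs : list C) (z : C) : C :=
  CSeries (fun n =>
    Cmult (Cmult (fold_right Cmult (RtoC 1) (map (fun a => poch a n) as_))
                 (fold_right Cmult (RtoC 1) (map (fun b => rgamma (Cplus b (RtoC (INR n)))) bs)))
          (Cdiv (pow_n z n) (RtoC (INR (Factorial.fact n))))).

Definition deltaL0 (L : nat) : R := if Nat.eqb L 0 then 1 else 0.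

From Stdlib Require Import Reals List Arith Factorial Lia Lra.
From Coquelicot Require Import Coquelicot.
Import ListNotations.
Open Scope R_scope.

(* Write x = -k^2.  Expanding both 1F~2 factors, the L-th term of the right-hand side
   is a double series in i, j whose terms are rational multiples of
   x^(2L+i+j) / (Gamma(1+mu+L+i) Gamma(1-mu+L+j)).  Collect the terms of the resulting
   triple series with 2L+i+j = N and set p = L+i.  The sum over L is Vandermonde's
   convolution  sum_L (2 - delta_L0) C(2p,p-L) C(2q,q-L) = C(2p+2q,p+q)  with q = N-p;
   after moving both reciprocal Gammas to 1/Gamma(1 +- mu + N) through
   1/Gamma(c+p) = (c+p)_(N-p) / Gamma(c+N), the sum over p is the Chu-Vandermonde
   identity  sum_p C(N,p) (1+mu+p)_(N-p) (1-mu+N-p)_p = (2N)!/N!  (reflect both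
   Pochhammer symbols).  What remains is the N-th term of the 2F~3.

   The rearrangement is justified by |1/Gamma(c+p)| <= M 2^p / p!: the triple series is
   then dominated by products of exponential series, and the partial sum over L < M
   differs from the first 2M terms of the 2F~3 by O(4^-M).  The reciprocal Gamma
   function itself is Gauss's limit; it exists because the ratio of consecutive terms of
   Gauss's sequence is 1 + O(1/n^2), and this gives 1/Gamma(z) = z/Gamma(z+1). *)

(** * Limits of complex sequences *)

Definition Ccv (u : nat -> C) (l : C) : Prop :=
  forall eps, 0 < eps -> exists N, forall n, (N <= n)%nat -> Cmod (u n - l) < eps.

Lemma Cmod_fst (z : C) : Rabs (fst z) <= Cmod z.
Proof. pose proof (Rmax_Cmod z); pose proof (Rmax_l (Rabs (fst z)) (Rabs (snd z))); lra. Qed.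

Lemma Cmod_snd (z : C) : Rabs (snd z) <= Cmod z.
Proof. pose proof (Rmax_Cmod z); pose proof (Rmax_r (Rabs (fst z)) (Rabs (snd z))); lra. Qed.

Lemma Cmod_le_fst_snd (z : C) : Cmod z <= Rabs (fst z) + Rabs (snd z).
Proof.
  unfold Cmod; rewrite <- (sqrt_pow2 (Rabs (fst z) + Rabs (snd z))).
  - apply sqrt_le_1_alt; rewrite <- (pow2_abs (fst z)), <- (pow2_abs (snd z)).
    pose proof (Rabs_pos (fst z)); pose proof (Rabs_pos (snd z)); nra.
  - pose proof (Rabs_pos (fst z)); pose proof (Rabs_pos (snd z)); lra.
Qed.

Lemma Ceq_fst_snd (a b : C) : fst a = fst b -> snd a = snd b -> a = b.
Proof. destruct a, b; simpl; intros -> ->; reflexivity. Qed.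

Lemma RtoC_neq_0 r : r <> 0 -> RtoC r <> RtoC 0.
Proof. intros H H0; apply RtoC_inj in H0; auto. Qed.

Lemma Cmod_sub_sym (a b : C) : Cmod (a - b) = Cmod (b - a).
Proof. rewrite <- Copp_minus_distr, Cmod_opp; reflexivity. Qed.

Lemma Cmod_sub_triangle (a b c : C) : Cmod (a - c) <= Cmod (a - b) + Cmod (b - c).
Proof. replace (a - c)%C with ((a - b) + (b - c))%C by ring; apply Cmod_triangle. Qed.

Lemma Ccv_unique u l1 l2 : Ccv u l1 -> Ccv u l2 -> l1 = l2.
Proof.
  intros H1 H2; apply Ceq_minus, Cmod_eq_0, Rle_antisym; [| apply Cmod_ge_0].
  apply Rnot_lt_le; intro Hpos.
  destruct (H1 (Cmod (l1 - l2) / 2)) as [N1 HN1]; [lra |].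
  destruct (H2 (Cmod (l1 - l2) / 2)) as [N2 HN2]; [lra |].
  specialize (HN1 (N1 + N2)%nat ltac:(lia)); specialize (HN2 (N1 + N2)%nat ltac:(lia)).
  pose proof (Cmod_sub_triangle l1 (u (N1 + N2)%nat) l2) as H.
  rewrite (Cmod_sub_sym l1 (u (N1 + N2)%nat)) in H; lra.
Qed.

Lemma Ccv_ext u v l :
  (exists N, forall n, (N <= n)%nat -> u n = v n) -> Ccv u l -> Ccv v l.
Proof.
  intros [N HN] Hu eps Heps; destruct (Hu eps Heps) as [M HM]; exists (N + M)%nat.
  intros n Hn; rewrite <- HN by lia; apply HM; lia.
Qed.

Lemma Ccv_const c : Ccv (fun _ => c) c.
Proof.
  intros eps Heps; exists 0%nat; intros n _.
  replace (c - c)%C with (RtoC 0) by ring; rewrite Cmod_0; exact Heps.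
Qed.

Lemma Ccv_plus u v a b : Ccv u a -> Ccv v b -> Ccv (fun n => u n + v n)%C (a + b)%C.
Proof.
  intros Hu Hv eps Heps.
  destruct (Hu (eps / 2)) as [N1 H1]; [lra |]; destruct (Hv (eps / 2)) as [N2 H2]; [lra |].
  exists (N1 + N2)%nat; intros n Hn.
  specialize (H1 n ltac:(lia)); specialize (H2 n ltac:(lia)).
  replace (u n + v n - (a + b))%C with ((u n - a) + (v n - b))%C by ring.
  pose proof (Cmod_triangle (u n - a) (v n - b)); lra.
Qed.

Lemma Cmod_prefix_bound (u : nat -> C) N :
  exists M, 0 <= M /\ forall n, (n <= N)%nat -> Cmod (u n) <= M.
Proof.
  induction N as [| N [M [HM0 HM]]].
  - exists (Cmod (u 0%nat)); split; [apply Cmod_ge_0 |].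
    intros n Hn; replace n with 0%nat by lia; lra.
  - exists (M + Cmod (u (S N))); pose proof (Cmod_ge_0 (u (S N))); split; [lra |].
    intros n Hn; destruct (Nat.eq_dec n (S N)) as [-> | Hne]; [lra |].
    pose proof (HM n ltac:(lia)); lra.
Qed.

Lemma Ccv_bounded u l : Ccv u l -> exists M, 0 <= M /\ forall n, Cmod (u n) <= M.
Proof.
  intros Hu; destruct (Hu 1 Rlt_0_1) as [N HN].
  destruct (Cmod_prefix_bound u N) as [M [HM0 HM]].
  pose proof (Cmod_ge_0 l).
  exists (M + Cmod l + 1); split; [lra |]; intros n.
  destruct (le_lt_dec n N) as [Hle | Hlt]; [pose proof (HM n Hle); lra |].
  specialize (HN n ltac:(lia)); replace (u n) with ((u n - l) + l)%C by ring.
  pose proof (Cmod_triangle (u n - l) l); lra.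
Qed.

Lemma Ccv_mult u v a b : Ccv u a -> Ccv v b -> Ccv (fun n => u n * v n)%C (a * b)%C.
Proof.
  intros Hu Hv; destruct (Ccv_bounded u a Hu) as [M [HM0 HM]]; intros eps Heps.
  pose proof (Cmod_ge_0 b) as Hb.
  set (e1 := eps / (2 * (Cmod b + 1))); set (e2 := eps / (2 * (M + 1))).
  destruct (Hu e1) as [N1 H1]; [apply Rdiv_lt_0_compat; lra |].
  destruct (Hv e2) as [N2 H2]; [apply Rdiv_lt_0_compat; lra |].
  exists (N1 + N2)%nat; intros n Hn.
  specialize (H1 n ltac:(lia)); specialize (H2 n ltac:(lia)).
  replace (u n * v n - a * b)%C with (u n * (v n - b) + (u n - a) * b)%C by ring.
  eapply Rle_lt_trans; [apply Cmod_triangle |]; rewrite !Cmod_mult.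
  assert (Cmod (u n) * Cmod (v n - b) <= M * e2)
    by (apply Rmult_le_compat; try apply Cmod_ge_0; auto; lra).
  assert (Cmod (u n - a) * Cmod b <= e1 * Cmod b) by (apply Rmult_le_compat_r; lra).
  assert (M * e2 < eps / 2)
    by (unfold e2; apply (Rmult_lt_reg_r (2 * (M + 1))); [lra | field_simplify; lra]).
  assert (e1 * Cmod b < eps / 2)
    by (unfold e1; apply (Rmult_lt_reg_r (2 * (Cmod b + 1))); [lra | field_simplify; lra]).
  lra.
Qed.

Lemma Ccv_scal c u a : Ccv u a -> Ccv (fun n => c * u n)%C (c * a)%C.
Proof. apply Ccv_mult, Ccv_const. Qed.

Lemma Ccv_squeeze u l (e : nat -> R) :
  (forall eps, 0 < eps -> exists N, forall n, (N <= n)%nat -> e n < eps) ->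
  (exists N, forall n, (N <= n)%nat -> Cmod (u n - l) <= e n) -> Ccv u l.
Proof.
  intros He [N HN] eps Heps; destruct (He eps Heps) as [M HM]; exists (N + M)%nat.
  intros n Hn; specialize (HN n ltac:(lia)); specialize (HM n ltac:(lia)); lra.
Qed.

Lemma Ccv_le u l c B N0 :
  Ccv u l -> (forall n, (N0 <= n)%nat -> Cmod (u n - c) <= B) -> Cmod (l - c) <= B.
Proof.
  intros Hu HB; apply Rnot_lt_le; intros Hlt.
  destruct (Hu (Cmod (l - c) - B)) as [N HN]; [lra |].
  specialize (HN (N + N0)%nat ltac:(lia)); specialize (HB (N + N0)%nat ltac:(lia)).
  pose proof (Cmod_sub_triangle l (u (N + N0)%nat) c).
  rewrite Cmod_sub_sym in HN; lra.
Qed.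

Lemma Ccv_Clim u l : Ccv u l -> Clim u = l.
Proof.
  intros H; unfold Clim.
  assert (Hfst : is_lim_seq (fun n => fst (u n)) (fst l)).
  { apply is_lim_seq_spec; intros eps; destruct (H eps (cond_pos eps)) as [N HN].
    exists N; intros n Hn; eapply Rle_lt_trans; [| exact (HN n Hn)].
    replace (fst (u n) - fst l) with (fst (u n - l)%C) by (simpl; ring); apply Cmod_fst. }
  assert (Hsnd : is_lim_seq (fun n => snd (u n)) (snd l)).
  { apply is_lim_seq_spec; intros eps; destruct (H eps (cond_pos eps)) as [N HN].
    exists N; intros n Hn; eapply Rle_lt_trans; [| exact (HN n Hn)].
    replace (snd (u n) - snd l) with (snd (u n - l)%C) by (simpl; ring); apply Cmod_snd. }
  rewrite (is_lim_seq_unique _ _ Hfst), (is_lim_seq_unique _ _ Hsnd); destruct l; reflexivity.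
Qed.

Lemma Ccv_is_series (a : nat -> C) l : Ccv (sum_n a) l -> is_series a l.
Proof.
  intros H; apply (filterlim_locally_ball_norm (K := C_AbsRing) (U := C_NormedModule)).
  intros eps; destruct (H eps (cond_pos eps)) as [N HN]; exists N; exact HN.
Qed.

Lemma Ccv_cauchy (u : nat -> C) :
  (forall eps, 0 < eps -> exists N, forall n m, (N <= n)%nat -> (N <= m)%nat ->
     Cmod (u n - u m) < eps) ->
  exists l, Ccv u l.
Proof.
  intros H.
  assert (Hfst : ex_finite_lim_seq (fun n => fst (u n))).
  { apply ex_lim_seq_cauchy_corr; intros eps; destruct (H eps (cond_pos eps)) as [N HN].
    exists N; intros n m Hn Hm; eapply Rle_lt_trans; [| exact (HN n m Hn Hm)].
    replace (fst (u n) - fst (u m)) with (fst (u n - u m)%C) by (simpl; ring); apply Cmod_fst. }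
  assert (Hsnd : ex_finite_lim_seq (fun n => snd (u n))).
  { apply ex_lim_seq_cauchy_corr; intros eps; destruct (H eps (cond_pos eps)) as [N HN].
    exists N; intros n m Hn Hm; eapply Rle_lt_trans; [| exact (HN n m Hn Hm)].
    replace (snd (u n) - snd (u m)) with (snd (u n - u m)%C) by (simpl; ring); apply Cmod_snd. }
  destruct Hfst as [x Hx], Hsnd as [y Hy]; exists (x, y); intros eps Heps.
  apply is_lim_seq_spec in Hx, Hy.
  destruct (Hx (mkposreal (eps / 2) ltac:(lra))) as [N1 H1].
  destruct (Hy (mkposreal (eps / 2) ltac:(lra))) as [N2 H2].
  exists (N1 + N2)%nat; intros n Hn.
  specialize (H1 n ltac:(lia)); specialize (H2 n ltac:(lia)); simpl in H1, H2.
  eapply Rle_lt_trans; [apply Cmod_le_fst_snd |]; simpl; unfold Rminus in *; lra.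
Qed.

Lemma INR_unbounded (x : R) : exists n : nat, x < INR n.
Proof.
  destruct (INR_archimed 1 x Rlt_0_1) as [n Hn]; exists n; lra.
Qed.

Lemma div_INR_S_eventually_lt (c : R) eps :
  0 < eps -> exists N, forall n, (N <= n)%nat -> c / (INR n + 1) < eps.
Proof.
  intros Heps; destruct (INR_unbounded (c / eps)) as [N HN]; exists N; intros n Hn.
  apply le_INR in Hn; pose proof (pos_INR n).
  apply (Rmult_lt_reg_r (INR n + 1)); [lra |].
  unfold Rdiv; rewrite Rmult_assoc, Rinv_l by lra.
  assert (c / eps * eps = c) by (field; lra); nra.
Qed.

Lemma pow_inv4_eventually_lt K eps :
  0 <= K -> 0 < eps -> exists M0, forall M, (M0 <= M)%nat -> (/ 4) ^ M * K < eps.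
Proof.
  intros HK Heps; destruct (div_INR_S_eventually_lt K eps Heps) as [M0 HM0].
  exists M0; intros M HM; specialize (HM0 M HM).
  assert (H4 : INR M + 1 <= 4 ^ M).
  { clear; induction M as [| M IH]; [simpl; lra |].
    rewrite S_INR; simpl; pose proof (pos_INR M); lra. }
  pose proof (pos_INR M); rewrite pow_inv; eapply Rle_lt_trans; [| exact HM0].
  unfold Rdiv; rewrite Rmult_comm; apply Rmult_le_compat_l; [exact HK |].
  apply Rinv_le_contravar; lra.
Qed.

(** * Finite sums *)

(* [csum f n] has the n terms f 0, ..., f (n-1); Coquelicot's [sum_n a n] has n+1. *)
Fixpoint csum (f : nat -> C) (n : nat) : C :=
  match n with O => RtoC 0 | S m => (csum f m + f m)%C end.

Fixpoint rsum (f : nat -> R) (n : nat) : R :=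
  match n with O => 0 | S m => rsum f m + f m end.

Lemma sum_n_csum (a : nat -> C) n : sum_n a n = csum a (S n).
Proof.
  induction n as [| n IH]; [rewrite sum_O; simpl; ring |].
  rewrite sum_Sn, IH; reflexivity.
Qed.

Lemma csum_ext f g n : (forall i, (i < n)%nat -> f i = g i) -> csum f n = csum g n.
Proof.
  induction n as [| n IH]; intros H; simpl; [reflexivity |].
  rewrite IH, H; [reflexivity | lia | intros i Hi; apply H; lia].
Qed.

Lemma rsum_ext f g n : (forall i, (i < n)%nat -> f i = g i) -> rsum f n = rsum g n.
Proof.
  induction n as [| n IH]; intros H; simpl; [reflexivity |].
  rewrite IH, H; [reflexivity | lia | intros i Hi; apply H; lia].
Qed.

Lemma csum_plus f g n : csum (fun i => f i + g i)%C n = (csum f n + csum g n)%C.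
Proof. induction n as [| n IH]; simpl; [ring | rewrite IH; ring]. Qed.

Lemma csum_minus f g n : csum (fun i => f i - g i)%C n = (csum f n - csum g n)%C.
Proof. induction n as [| n IH]; simpl; [ring | rewrite IH; ring]. Qed.

Lemma csum_scal c f n : csum (fun i => c * f i)%C n = (c * csum f n)%C.
Proof. induction n as [| n IH]; simpl; [ring | rewrite IH; ring]. Qed.

Lemma csum_zero n : csum (fun _ => RtoC 0) n = RtoC 0.
Proof. induction n as [| n IH]; simpl; [reflexivity | rewrite IH; ring]. Qed.

Lemma csum_eq_zero f n : (forall i, (i < n)%nat -> f i = RtoC 0) -> csum f n = RtoC 0.
Proof. intros H; rewrite (csum_ext f (fun _ => RtoC 0)) by exact H; apply csum_zero. Qed.

Lemma rsum_scal c f n : rsum (fun i => c * f i) n = c * rsum f n.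
Proof. induction n as [| n IH]; simpl; [ring | rewrite IH; ring]. Qed.

Lemma rsum_le f g n : (forall i, (i < n)%nat -> f i <= g i) -> rsum f n <= rsum g n.
Proof.
  induction n as [| n IH]; intros H; simpl; [lra |].
  pose proof (H n ltac:(lia)); pose proof (IH ltac:(intros; apply H; lia)); lra.
Qed.

Lemma rsum_nonneg f n : (forall i, (i < n)%nat -> 0 <= f i) -> 0 <= rsum f n.
Proof.
  induction n as [| n IH]; intros H; simpl; [lra |].
  pose proof (H n ltac:(lia)); pose proof (IH ltac:(intros; apply H; lia)); lra.
Qed.

Lemma rsum_le_mono f n m : (forall i, 0 <= f i) -> (n <= m)%nat -> rsum f n <= rsum f m.
Proof. intros H Hnm; induction Hnm; simpl; [lra | pose proof (H m); lra]. Qed.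

Lemma Cmod_csum f n : Cmod (csum f n) <= rsum (fun i => Cmod (f i)) n.
Proof.
  induction n as [| n IH]; simpl; [rewrite Cmod_0; lra |].
  eapply Rle_trans; [apply Cmod_triangle | lra].
Qed.

Lemma csum_swap (f : nat -> nat -> C) n m :
  csum (fun i => csum (fun j => f i j) m) n = csum (fun j => csum (fun i => f i j) n) m.
Proof.
  induction n as [| n IH]; simpl; [rewrite csum_zero; reflexivity |].
  rewrite IH, <- csum_plus; reflexivity.
Qed.

Lemma csum_mult f g n m :
  (csum f n * csum g m)%C = csum (fun i => csum (fun j => f i * g j) m)%C n.
Proof.
  induction n as [| n IH]; simpl; [ring |].
  rewrite <- IH, csum_scal; ring.
Qed.

Lemma csum_split f n m :
  csum f (n + m) = (csum f n + csum (fun i => f (n + i)%nat) m)%C.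
Proof.
  induction m as [| m IH]; simpl; [rewrite Nat.add_0_r; ring |].
  rewrite Nat.add_succ_r; simpl; rewrite IH; ring.
Qed.

Lemma csum_first f n : csum f (S n) = (f 0%nat + csum (fun i => f (S i)) n)%C.
Proof. replace (S n) with (1 + n)%nat by lia; rewrite csum_split; simpl; ring. Qed.

Lemma csum_rev f n : csum f n = csum (fun i => f (n - 1 - i)%nat) n.
Proof.
  revert f; induction n as [| n IH]; intros f; [reflexivity |].
  rewrite csum_first, IH; simpl.
  replace (n - 0 - n)%nat with 0%nat by lia; rewrite Cplus_comm; f_equal.
  apply csum_ext; intros; f_equal; lia.
Qed.

Lemma csum_extend f n m :
  (n <= m)%nat -> (forall i, (n <= i)%nat -> f i = RtoC 0) -> csum f m = csum f n.
Proof. intros H Hf; induction H; simpl; [reflexivity | rewrite IHle, Hf by lia; ring]. Qed.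

Lemma csum_delta (f : nat -> C) n j :
  (j < n)%nat -> csum (fun i => if (i =? j)%nat then f i else RtoC 0) n = f j.
Proof.
  intros Hj; replace n with (S j + (n - S j))%nat by lia.
  rewrite csum_split, (csum_eq_zero _ (n - S j)).
  - simpl; rewrite Nat.eqb_refl, csum_eq_zero; [ring |].
    intros i Hi; destruct (Nat.eqb_spec i j); [lia | reflexivity].
  - intros i _; destruct (Nat.eqb_spec (S j + i) j); [lia | reflexivity].
Qed.

Lemma csum_indicator_eq (g : nat -> C) a N I : (N < I)%nat ->
  csum (fun j => if (a + j =? N)%nat then g j else 0) I
  = if (a <=? N)%nat then g (N - a)%nat else 0.
Proof.
  intros HI; destruct (Nat.leb_spec a N).
  - rewrite <- (csum_delta g I (N - a)) by lia; apply csum_ext; intros j _.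
    destruct (Nat.eqb_spec (a + j) N), (Nat.eqb_spec j (N - a)); reflexivity || lia.
  - apply csum_eq_zero; intros j _; destruct (Nat.eqb_spec (a + j) N); reflexivity || lia.
Qed.

Lemma csum_indicator_lt (w : C) a K :
  csum (fun N => if (a =? N)%nat then w else 0) K = if (a <? K)%nat then w else 0.
Proof.
  destruct (Nat.ltb_spec a K).
  - transitivity (csum (fun i => if (i =? a)%nat then w else 0) K);
      [apply csum_ext; intros; rewrite Nat.eqb_sym; reflexivity
        | exact (csum_delta (fun _ => w) K a H)].
  - apply csum_eq_zero; intros i Hi; destruct (Nat.eqb_spec a i); reflexivity || lia.
Qed.

Lemma csum_shift_indicator (F : nat -> C) I L :
  (L <= I)%nat -> (forall i, (I - L <= i)%nat -> F i = 0) ->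
  csum F I = csum (fun p => if (L <=? p)%nat then F (p - L)%nat else 0) I.
Proof.
  intros HL HF; replace I with (L + (I - L))%nat at 2 by lia.
  rewrite csum_split, (csum_eq_zero _ L), Cplus_0_l.
  - rewrite (csum_extend F (I - L) I) by (lia || assumption).
    apply csum_ext; intros i _; rewrite leb_correct by lia; f_equal; lia.
  - intros i Hi; rewrite leb_correct_conv by lia; reflexivity.
Qed.

Lemma csum_truncate (g : nat -> C) M I :
  (M <= I)%nat -> csum g M = csum (fun L => if (L <? M)%nat then g L else 0) I.
Proof.
  intros H; rewrite (csum_extend _ M I H).
  - apply csum_ext; intros L HL; rewrite (proj2 (Nat.ltb_lt L M)) by lia; reflexivity.
  - intros i Hi; rewrite (proj2 (Nat.ltb_ge i M)) by lia; reflexivity.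
Qed.

Lemma Ccv_csum (g : nat -> nat -> C) (l : nat -> C) M :
  (forall L, (L < M)%nat -> Ccv (g L) (l L)) -> Ccv (fun I => csum (fun L => g L I) M) (csum l M).
Proof.
  induction M as [| M IH]; intros H; simpl; [apply Ccv_const |].
  apply Ccv_plus; [apply IH; intros L HL |]; apply H; lia.
Qed.

Lemma rsum_triple_product c (x y z : nat -> R) I :
  rsum (fun L => rsum (fun i => rsum (fun j => c * (x L * (y i * z j))) I) I) I
  = c * (rsum x I * (rsum y I * rsum z I)).
Proof.
  transitivity (rsum (fun L => (c * x L * rsum z I) * rsum y I) I).
  - apply rsum_ext; intros L _; rewrite <- rsum_scal; apply rsum_ext; intros i _.
    replace (c * x L * rsum z I * y i) with (c * x L * y i * rsum z I) by ring.
    rewrite <- rsum_scal; apply rsum_ext; intros; ring.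
  - transitivity ((c * rsum z I * rsum y I) * rsum x I); [| ring].
    rewrite <- rsum_scal; apply rsum_ext; intros; ring.
Qed.

Lemma rsum_exp y n : 0 <= y -> rsum (fun i => y ^ i / INR (fact i)) n <= exp y.
Proof.
  intros Hy; destruct n as [| n]; [simpl; pose proof (exp_pos y); lra |].
  replace (rsum (fun i => y ^ i / INR (fact i)) (S n))
    with (sum_f_R0 (fun i => y ^ i / INR (fact i)) n); [apply exp_ge_taylor; exact Hy |].
  induction n as [| n IH]; simpl in *; [ring | rewrite IH; reflexivity].
Qed.

Lemma csum_increment_le (a : nat -> C) (b : nat -> R) n m :
  (forall n, Cmod (a n) <= b n) -> (n <= m)%nat ->
  Cmod (csum a m - csum a n) <= rsum b m - rsum b n.
Proof.
  intros Hab Hnm; induction Hnm as [| m Hnm IH].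
  - replace (csum a n - csum a n)%C with (RtoC 0) by ring; rewrite Cmod_0; lra.
  - simpl; replace (csum a m + a m - csum a n)%C with ((csum a m - csum a n) + a m)%C by ring.
    eapply Rle_trans; [apply Cmod_triangle |]; pose proof (Hab m); lra.
Qed.

Lemma csum_cv_dominated (a : nat -> C) (b : nat -> R) B :
  (forall n, Cmod (a n) <= b n) -> (forall n, rsum b n <= B) -> exists l, Ccv (csum a) l.
Proof.
  intros Hab HB.
  assert (Hb : ex_finite_lim_seq (rsum b)).
  { apply ex_finite_lim_seq_incr with B; [| exact HB].
    intros n; simpl; pose proof (Hab n); pose proof (Cmod_ge_0 (a n)); lra. }
  apply ex_lim_seq_cauchy_corr in Hb.
  apply Ccv_cauchy; intros eps Heps; destruct (Hb (mkposreal eps Heps)) as [N HN]; exists N.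
  assert (Hle : forall n m, (N <= n)%nat -> (n <= m)%nat -> Cmod (csum a m - csum a n) < eps).
  { intros n m Hn Hm; eapply Rle_lt_trans; [apply csum_increment_le; eassumption |].
    specialize (HN m n ltac:(lia) Hn); simpl in HN.
    eapply Rle_lt_trans; [apply Rle_abs | exact HN]. }
  intros n m Hn Hm; destruct (le_lt_dec n m).
  - rewrite Cmod_sub_sym; apply Hle; lia.
  - apply Hle; lia.
Qed.

Lemma Ccv_CSeries (a : nat -> C) l : Ccv (csum a) l -> Ccv (csum a) (CSeries a).
Proof.
  intros H; replace (CSeries a) with l; [exact H |].
  symmetry; apply Ccv_Clim; intros eps Heps; destruct (H eps Heps) as [N HN].
  exists N; intros n Hn; rewrite sum_n_csum; apply HN; lia.
Qed.

Lemma Ccv_CSeries_exp (a : nat -> C) (K y : R) :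
  0 <= K -> 0 <= y -> (forall n, Cmod (a n) <= K * (y ^ n / INR (fact n))) ->
  Ccv (csum a) (CSeries a).
Proof.
  intros HK Hy Ha.
  destruct (csum_cv_dominated a (fun n => K * (y ^ n / INR (fact n))) (K * exp y) Ha) as [l Hl].
  - intros n; rewrite rsum_scal; apply Rmult_le_compat_l; [exact HK | apply rsum_exp, Hy].
  - exact (Ccv_CSeries a l Hl).
Qed.

(** * The complex exponential *)

Lemma cexp_add u v : cexp (u + v) = (cexp u * cexp v)%C.
Proof.
  destruct u as [a b], v as [c d]; unfold cexp; apply Ceq_fst_snd; simpl; rewrite exp_plus.
  - rewrite cos_plus; ring.
  - rewrite sin_plus; ring.
Qed.

Lemma cexp_real r : cexp (RtoC r) = RtoC (exp r).
Proof. unfold cexp; apply Ceq_fst_snd; simpl; [rewrite cos_0 | rewrite sin_0]; ring. Qed.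

Lemma cexp_neq_0 u : cexp u <> RtoC 0.
Proof.
  intros H; pose proof (cexp_add u (- u)) as E.
  rewrite H, Cmult_0_l, Cplus_opp_r, cexp_real, exp_0 in E; apply C1_nz; exact E.
Qed.

Lemma cexp_opp u : cexp (- u) = (/ cexp u)%C.
Proof.
  pose proof (cexp_add u (- u)) as E; rewrite Cplus_opp_r, cexp_real, exp_0 in E.
  rewrite <- (Cmult_1_l (cexp (- u))), <- (Cinv_l (cexp u)), <- Cmult_assoc, <- E
    by apply cexp_neq_0.
  apply Cmult_1_r.
Qed.

Lemma exp_le_compat a b : a <= b -> exp a <= exp b.
Proof. intros [H | ->]; [left; apply exp_increasing; exact H | lra]. Qed.

Lemma exp_second_order a : Rabs a <= 1/2 -> 1 + a <= exp a <= 1 + a + 2 * a ^ 2.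
Proof.
  intros Ha; split; [apply exp_ineq1_le |].
  pose proof (exp_ineq1_le (- a)); pose proof (exp_pos a).
  assert (exp a * exp (- a) = 1) by (rewrite <- exp_plus, Rplus_opp_r; apply exp_0).
  apply Rabs_le_between in Ha.
  assert (exp a * (1 - a) <= 1) by nra; nra.
Qed.

Lemma cos_second_order b : -1 <= b <= 1 -> 1 - b ^ 2 / 2 <= cos b.
Proof.
  intros Hb; destruct (pre_cos_bound b 0) as [Hlo _]; try lra.
  unfold cos_approx, cos_term in Hlo; simpl in Hlo.
  eapply Rle_trans; [| exact Hlo]; right; field.
Qed.

Lemma sin_second_order b :
  Rabs b <= 1 -> Rabs (sin b) <= Rabs b /\ Rabs (sin b - b) <= b ^ 2.
Proof.
  assert (Hpos : forall x, 0 <= x <= 1 -> x - x ^ 3 / 6 <= sin x <= x).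
  { intros x Hx; destruct (pre_sin_bound x 0) as [Hlo _]; try lra.
    unfold sin_approx, sin_term in Hlo; simpl in Hlo; split.
    - eapply Rle_trans; [| exact Hlo]; right; field.
    - destruct (Req_dec x 0) as [-> | Hx0]; [rewrite sin_0; lra | left; apply sin_lt_x; lra]. }
  intros Hb; destruct (Rle_or_lt 0 b) as [Hb0 | Hb0].
  - rewrite Rabs_pos_eq in Hb by lra; pose proof (Hpos b ltac:(lra)).
    split; [rewrite !Rabs_pos_eq | rewrite Rabs_left1]; nra.
  - rewrite Rabs_left in Hb by lra; pose proof (Hpos (- b) ltac:(lra)) as H.
    rewrite sin_neg in H.
    split; [rewrite (Rabs_left b), Rabs_left1 | rewrite Rabs_pos_eq]; nra.
Qed.

Lemma cexp_second_order w : Cmod w <= 1/2 -> Cmod (cexp w - 1 - w) <= 4 * Cmod w ^ 2.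
Proof.
  intros Hw; destruct w as [a b].
  pose proof (Cmod_fst (a, b)) as Ha; pose proof (Cmod_snd (a, b)) as Hb; simpl in Ha, Hb.
  assert (Hsq : Cmod (a, b) ^ 2 = a ^ 2 + b ^ 2) by (rewrite Cmod2_alt; reflexivity).
  set (r := Cmod (a, b)) in *.
  pose proof (exp_second_order a ltac:(lra)) as [E1 E2].
  pose proof (cos_second_order b) as C1; pose proof (COS_bound b) as [_ C2].
  pose proof (sin_second_order b ltac:(lra)) as [S1 S2].
  eapply Rle_trans; [apply Cmod_le_fst_snd |]; unfold cexp; simpl.
  apply Rabs_le_between in Ha; apply Rabs_le_between in Hb.
  assert (Hre : Rabs (exp a * cos b + - (1) + - a) <= 2 * r ^ 2).
  { specialize (C1 ltac:(lra)); assert (exp a <= 2) by nra; apply Rabs_le; split; nra. }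
  assert (Him : Rabs (exp a * sin b + - 0 + - b) <= 2 * r ^ 2).
  { replace (exp a * sin b + - 0 + - b) with ((exp a - 1) * sin b + (sin b - b)) by ring.
    eapply Rle_trans; [apply Rabs_triang |]; rewrite Rabs_mult.
    assert (Rabs (exp a - 1) <= 2 * Rabs a).
    { apply Rabs_le; destruct (Rle_or_lt 0 a);
        [rewrite Rabs_pos_eq by lra | rewrite Rabs_left by lra]; nra. }
    assert (Rabs (exp a - 1) * Rabs (sin b) <= 2 * Rabs a * Rabs b)
      by (apply Rmult_le_compat; auto using Rabs_pos).
    assert (2 * Rabs a * Rabs b <= a ^ 2 + b ^ 2).
    { rewrite <- (pow2_abs a), <- (pow2_abs b); pose proof (pow2_ge_0 (Rabs a - Rabs b)); nra. }
    nra. }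
  replace (r * (r * 1)) with (r ^ 2) by ring; lra.
Qed.

Lemma cexp_sub_1 w : Cmod w <= 1/2 -> Cmod (cexp w - 1) <= 3 * Cmod w.
Proof.
  intros Hw; replace (cexp w - 1)%C with ((cexp w - 1 - w) + w)%C by ring.
  eapply Rle_trans; [apply Cmod_triangle |].
  pose proof (cexp_second_order w Hw); pose proof (Cmod_ge_0 w).
  assert (Cmod w ^ 2 <= Cmod w / 2) by nra; lra.
Qed.

(** * The reciprocal Gamma function *)

Lemma poch_S c n : poch c (S n) = (poch c n * (c + INR n))%C.
Proof. reflexivity. Qed.

Lemma poch_S_l c n : poch c (S n) = (c * poch (c + 1) n)%C.
Proof.
  induction n as [| n IH]; [simpl; ring |].
  rewrite poch_S, IH, poch_S, S_INR, RtoC_plus; ring.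
Qed.

Lemma INR_S_neq_0 n : INR (S n) <> 0.
Proof. apply not_0_INR; lia. Qed.

Definition gauss_seq (z : C) (n : nat) : C :=
  (poch z (S n) * (RtoC (/ INR (fact n)) * cexp (- (z * ln (INR n)))))%C.

Lemma gauss_seq_eq z n :
  (poch z (S n) / (INR (fact n) * npow_c n z))%C = gauss_seq z n.
Proof.
  unfold gauss_seq, npow_c; rewrite cexp_opp, RtoC_inv by apply INR_fact_neq_0.
  field; split; [apply cexp_neq_0 | apply RtoC_neq_0, INR_fact_neq_0].
Qed.

Definition gauss_ratio (z : C) (n : nat) : C :=
  ((1 + z / INR (S n)) * cexp (- (z * RtoC (ln (INR (S n)) - ln (INR n)))))%C.

Lemma gauss_seq_S z n : gauss_seq z (S n) = (gauss_seq z n * gauss_ratio z n)%C.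
Proof.
  unfold gauss_seq, gauss_ratio; rewrite (poch_S z (S n)).
  replace (- (z * ln (INR (S n))))%C
    with (- (z * ln (INR n)) + - (z * RtoC (ln (INR (S n)) - ln (INR n))))%C
    by (rewrite RtoC_minus; ring).
  rewrite cexp_add, fact_simpl, mult_INR.
  pose proof (INR_S_neq_0 n); pose proof (INR_fact_neq_0 n).
  rewrite !RtoC_inv, RtoC_mult by (try apply Rmult_integral_contrapositive; auto).
  field; split; apply RtoC_neq_0; auto.
Qed.

Lemma ln_succ_sub_bounds n :
  (1 <= n)%nat -> / INR (S n) <= ln (INR (S n)) - ln (INR n) <= / INR n.
Proof.
  intros Hn; apply le_INR in Hn; simpl in Hn; rewrite S_INR; set (x := INR n) in *.
  rewrite <- ln_div by lra; split.
  - rewrite <- (Ropp_involutive (ln _)), <- ln_Rinv by (apply Rdiv_lt_0_compat; lra).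
    apply Ropp_le_cancel; rewrite Ropp_involutive, <- (ln_exp (- / (x + 1))).
    apply ln_le; [apply Rinv_0_lt_compat, Rdiv_lt_0_compat; lra |].
    pose proof (exp_ineq1_le (- / (x + 1))).
    replace (/ ((x + 1) / x)) with (1 + - / (x + 1)) by (field; lra); lra.
  - rewrite <- (ln_exp (/ x)); apply ln_le; [apply Rdiv_lt_0_compat; lra |].
    pose proof (exp_ineq1_le (/ x)); replace ((x + 1) / x) with (1 + / x) by (field; lra); lra.
Qed.

Lemma gauss_ratio_estimate (z : C) (x d : R) :
  1 <= x -> 2 * Cmod z <= x -> / (x + 1) <= d <= / x ->
  Cmod ((1 + z / RtoC (x + 1)) * cexp (- (z * d)) - 1) <= (7 * Cmod z ^ 2 + Cmod z) / x ^ 2.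
Proof.
  intros Hx Hz [Hd1 Hd2]; pose proof (Cmod_ge_0 z) as Hz0.
  assert (Hinv : 0 < / (x + 1) <= / x)
    by (split; [apply Rinv_0_lt_compat | apply Rinv_le_contravar]; lra).
  set (w := (- (z * d))%C).
  assert (Hw : Cmod w <= Cmod z / x).
  { unfold w; rewrite Cmod_opp, Cmod_mult, Cmod_R, Rabs_pos_eq by lra.
    apply Rmult_le_compat_l; lra. }
  assert (Hw2 : Cmod w <= 1/2).
  { eapply Rle_trans; [exact Hw |]; apply (Rmult_le_reg_r x); [lra |].
    unfold Rdiv; rewrite Rmult_assoc, Rinv_l by lra; lra. }
  assert (Hzx : Cmod z ^ 2 / x ^ 2 = (Cmod z / x) ^ 2) by (field; lra).
  assert (T1 : Cmod (cexp w - 1 - w) <= 4 * (Cmod z ^ 2 / x ^ 2)).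
  { eapply Rle_trans; [apply cexp_second_order, Hw2 |]; rewrite Hzx.
    apply Rmult_le_compat_l, pow_incr; [lra | split; [apply Cmod_ge_0 | exact Hw]]. }
  assert (T2 : Cmod (z * RtoC (/ (x + 1) - d)) <= Cmod z / x ^ 2).
  { rewrite Cmod_mult, Cmod_R, Rabs_left1 by lra.
    apply Rmult_le_compat_l; [lra |].
    replace (/ x ^ 2) with (/ x * / x) by (field; lra).
    enough (/ x - / (x + 1) <= / x * / x) by lra.
    replace (/ x - / (x + 1)) with (/ x * / (x + 1)) by (field; lra).
    apply Rmult_le_compat_l; lra. }
  assert (T3 : Cmod (z / RtoC (x + 1) * (cexp w - 1)) <= 3 * (Cmod z ^ 2 / x ^ 2)).
  { rewrite Cmod_mult, Cmod_div, Cmod_R, Rabs_pos_eq by (try apply RtoC_neq_0; lra).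
    pose proof (cexp_sub_1 w Hw2); rewrite Hzx.
    replace (3 * (Cmod z / x) ^ 2) with (Cmod z / x * (3 * (Cmod z / x))) by ring.
    apply Rmult_le_compat; try apply Cmod_ge_0.
    - apply Rdiv_le_0_compat; lra.
    - apply Rmult_le_compat_l; [lra | apply Rinv_le_contravar; lra].
    - lra. }
  replace ((1 + z / RtoC (x + 1)) * cexp w - 1)%C
    with ((cexp w - 1 - w) + z * RtoC (/ (x + 1) - d) + z / RtoC (x + 1) * (cexp w - 1))%C
    by (unfold w; rewrite RtoC_minus, RtoC_inv by lra; field; apply RtoC_neq_0; lra).
  eapply Rle_trans; [apply Cmod_triangle |].
  eapply Rle_trans; [apply Rplus_le_compat_r, Cmod_triangle |].
  replace ((7 * Cmod z ^ 2 + Cmod z) / x ^ 2)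
    with (4 * (Cmod z ^ 2 / x ^ 2) + Cmod z / x ^ 2 + 3 * (Cmod z ^ 2 / x ^ 2)) by (field; lra).
  lra.
Qed.

Lemma gauss_ratio_bound z n :
  (1 <= n)%nat -> 2 * Cmod z <= INR n ->
  Cmod (gauss_ratio z n - 1) <= (7 * Cmod z ^ 2 + Cmod z) / INR n ^ 2.
Proof.
  intros Hn Hz; unfold gauss_ratio; pose proof (ln_succ_sub_bounds n Hn) as Hd.
  rewrite S_INR in *; apply gauss_ratio_estimate; auto.
  apply le_INR in Hn; simpl in Hn; lra.
Qed.

Lemma inv_sq_le_telescope n : (1 <= n)%nat -> / INR n ^ 2 <= 2 * (/ INR n - / INR (S n)).
Proof.
  intros Hn; apply le_INR in Hn; simpl in Hn; rewrite S_INR.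
  replace (2 * (/ INR n - / (INR n + 1))) with (2 / (INR n * (INR n + 1))) by (field; lra).
  replace (/ INR n ^ 2) with (1 / (INR n * INR n)) by (field; lra).
  apply Rmult_le_reg_r with (INR n * INR n * (INR n + 1)); [nra | field_simplify; lra].
Qed.

Section ProductConvergence.

Variables (G g : nat -> C) (K : R) (n0 : nat).
Hypotheses (Hn0 : (1 <= n0)%nat) (HK : 0 <= K)
  (HG : forall n, (n0 <= n)%nat -> G (S n) = (G n * g n)%C)
  (Hg : forall n, (n0 <= n)%nat -> Cmod (g n - 1) <= K / INR n ^ 2).

Lemma prod_growth d :
  Cmod (G (n0 + d)%nat) <= Cmod (G n0) * exp (2 * K * (/ INR n0 - / INR (n0 + d))).
Proof.
  induction d as [| d IH].
  - rewrite Nat.add_0_r, Rminus_diag, Rmult_0_r, exp_0; lra.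
  - rewrite Nat.add_succ_r, HG, Cmod_mult by lia; set (n := (n0 + d)%nat) in *.
    assert (Cmod (g n) <= exp (K / INR n ^ 2)).
    { replace (g n) with ((g n - 1) + 1)%C by ring.
      eapply Rle_trans; [apply Cmod_triangle |]; rewrite Cmod_1.
      pose proof (exp_ineq1_le (K / INR n ^ 2)); pose proof (Hg n ltac:(lia)); lra. }
    assert (K / INR n ^ 2 <= 2 * K * (/ INR n - / INR (S n))).
    { pose proof (inv_sq_le_telescope n ltac:(lia)); unfold Rdiv; nra. }
    eapply Rle_trans; [apply Rmult_le_compat; try apply Cmod_ge_0; eassumption |].
    rewrite Rmult_assoc, <- exp_plus; apply Rmult_le_compat_l; [apply Cmod_ge_0 |].
    apply exp_le_compat; lra.
Qed.

Lemma prod_bounded n : (n0 <= n)%nat -> Cmod (G n) <= Cmod (G n0) * exp (2 * K).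
Proof.
  intros Hn; replace n with (n0 + (n - n0))%nat by lia.
  eapply Rle_trans; [apply prod_growth |].
  apply Rmult_le_compat_l; [apply Cmod_ge_0 | apply exp_le_compat].
  assert (0 < / INR (n0 + (n - n0))) by (apply Rinv_0_lt_compat, lt_0_INR; lia).
  assert (/ INR n0 <= 1).
  { apply le_INR in Hn0; simpl in Hn0; rewrite <- Rinv_1; apply Rinv_le_contravar; lra. }
  nra.
Qed.

Lemma prod_increment m d : (n0 <= m)%nat ->
  Cmod (G (m + d)%nat - G m) <=
  2 * (Cmod (G n0) * exp (2 * K)) * K * (/ INR m - / INR (m + d)).
Proof.
  intros Hm; set (B := Cmod (G n0) * exp (2 * K)).
  assert (HB : 0 <= B) by (apply Rmult_le_pos; [apply Cmod_ge_0 | left; apply exp_pos]).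
  induction d as [| d IH].
  - rewrite Nat.add_0_r, !Rminus_diag, Rmult_0_r.
    replace (G m - G m)%C with (RtoC 0) by ring; rewrite Cmod_0; lra.
  - rewrite Nat.add_succ_r; set (n := (m + d)%nat) in *.
    eapply Rle_trans; [apply (Cmod_sub_triangle _ (G n)) |].
    rewrite HG by lia; replace (G n * g n - G n)%C with (G n * (g n - 1))%C by ring.
    rewrite Cmod_mult.
    assert (Cmod (G n) * Cmod (g n - 1) <= B * (K / INR n ^ 2))
      by (apply Rmult_le_compat; try apply Cmod_ge_0; [apply prod_bounded | apply Hg]; lia).
    pose proof (inv_sq_le_telescope n ltac:(lia)).
    assert (B * (K / INR n ^ 2) <= 2 * B * K * (/ INR n - / INR (S n))).
    { replace (B * (K / INR n ^ 2)) with (B * K * / INR n ^ 2) by (unfold Rdiv; ring).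
      replace (2 * B * K * _) with (B * K * (2 * (/ INR n - / INR (S n)))) by ring.
      apply Rmult_le_compat_l; [nra | assumption]. }
    lra.
Qed.

Lemma prod_cv : exists l, Ccv G l.
Proof.
  set (B := Cmod (G n0) * exp (2 * K)).
  assert (HB : 0 <= B) by (apply Rmult_le_pos; [apply Cmod_ge_0 | left; apply exp_pos]).
  apply Ccv_cauchy; intros eps Heps.
  destruct (div_INR_S_eventually_lt (4 * B * K) eps Heps) as [N HN].
  assert (Hle : forall a b, (N + n0 <= a)%nat -> (a <= b)%nat -> Cmod (G b - G a) < eps).
  { intros a b Ha Hab; replace b with (a + (b - a))%nat by lia.
    eapply Rle_lt_trans; [apply prod_increment; lia |].
    assert (0 < / INR (a + (b - a))) by (apply Rinv_0_lt_compat, lt_0_INR; lia).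
    assert (1 <= INR a) by (apply (le_INR 1); lia).
    assert (/ INR a <= 2 / (INR a + 1))
      by (apply Rmult_le_reg_r with (INR a * (INR a + 1)); [nra | field_simplify; lra]).
    specialize (HN a ltac:(lia)).
    replace (4 * B * K / (INR a + 1)) with (2 * B * K * (2 / (INR a + 1))) in HN
      by (field; lra).
    fold B; assert (0 <= 2 * B * K) by nra; nra. }
  exists (N + n0)%nat; intros n m Hn Hm; destruct (le_lt_dec m n).
  - apply Hle; lia.
  - rewrite Cmod_sub_sym; apply Hle; lia.
Qed.

End ProductConvergence.

Lemma rgamma_cv z : Ccv (gauss_seq z) (rgamma z).
Proof.
  destruct (INR_unbounded (2 * Cmod z)) as [n1 Hn1].
  destruct (prod_cv (gauss_seq z) (gauss_ratio z) (7 * Cmod z ^ 2 + Cmod z) (S n1))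
    as [l Hl].
  - lia.
  - pose proof (Cmod_ge_0 z); nra.
  - intros n _; apply gauss_seq_S.
  - intros n Hn; apply gauss_ratio_bound; [lia |].
    apply le_INR in Hn; rewrite S_INR in Hn; lra.
  - replace (rgamma z) with l; [exact Hl |].
    symmetry; apply Ccv_Clim; apply (Ccv_ext (gauss_seq z)); [| exact Hl].
    exists 0%nat; intros n _; symmetry; apply gauss_seq_eq.
Qed.

Lemma succ_ratio_cv z : Ccv (fun n => (z + INR (S n)) / INR n)%C 1.
Proof.
  apply (Ccv_squeeze _ _ (fun n => 2 * Cmod (z + 1) / (INR n + 1))).
  { apply div_INR_S_eventually_lt. }
  exists 1%nat; intros n Hn; apply (le_INR 1) in Hn; simpl in Hn.
  replace ((z + INR (S n)) / INR n - 1)%C with ((z + 1) / INR n)%C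
    by (rewrite S_INR, RtoC_plus; field; apply RtoC_neq_0; lra).
  rewrite Cmod_div, Cmod_R, Rabs_pos_eq by (try apply RtoC_neq_0; lra).
  pose proof (Cmod_ge_0 (z + 1)).
  apply Rmult_le_reg_r with (INR n * (INR n + 1)); [nra | field_simplify; nra].
Qed.

Lemma cexp_opp_ln_INR n : (1 <= n)%nat -> cexp (RtoC (- ln (INR n))) = RtoC (/ INR n).
Proof. intros Hn; rewrite cexp_real, exp_Ropp, exp_ln by (apply lt_0_INR; lia); reflexivity. Qed.

Lemma gauss_seq_shift z n : (1 <= n)%nat ->
  (gauss_seq z n * ((z + INR (S n)) / INR n))%C = (z * gauss_seq (z + 1) n)%C.
Proof.
  intros Hn; unfold gauss_seq.
  replace (- ((z + 1) * ln (INR n)))%C with (- (z * ln (INR n)) + RtoC (- ln (INR n)))%C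
    by (rewrite RtoC_opp; ring).
  rewrite cexp_add, cexp_opp_ln_INR by exact Hn.
  set (E := cexp (- (z * ln (INR n)))).
  transitivity ((z * poch (z + 1) (S n)) * (RtoC (/ INR (fact n)) * (E * RtoC (/ INR n))))%C;
    [| ring].
  rewrite <- poch_S_l, (poch_S z (S n)).
  assert (INR n <> 0) by (apply not_0_INR; lia); pose proof (INR_fact_neq_0 n).
  rewrite !RtoC_inv by assumption; field; split; apply RtoC_neq_0; assumption.
Qed.

Lemma rgamma_S z : rgamma z = (z * rgamma (z + 1))%C.
Proof.
  assert (H : Ccv (fun n => z * gauss_seq (z + 1) n)%C (rgamma z * 1)%C).
  { eapply Ccv_ext; [| exact (Ccv_mult _ _ _ _ (rgamma_cv z) (succ_ratio_cv z))].
    exists 1%nat; intros n Hn; apply gauss_seq_shift, Hn. }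
  rewrite (Ccv_unique _ _ _ (Ccv_scal z _ _ (rgamma_cv (z + 1))) H); ring.
Qed.

Lemma poch_1 m : poch 1 m = RtoC (INR (fact m)).
Proof.
  induction m as [| m IH]; [reflexivity |].
  rewrite poch_S, IH, fact_simpl, mult_INR, S_INR, RtoC_mult, RtoC_plus; ring.
Qed.

Lemma rgamma_1 : rgamma 1 = 1.
Proof.
  apply (Ccv_unique (gauss_seq 1)); [apply rgamma_cv |].
  eapply Ccv_ext; [| exact (succ_ratio_cv 0)]; exists 1%nat; intros n Hn; unfold gauss_seq.
  replace (- (1 * ln (INR n)))%C with (RtoC (- ln (INR n))) by (rewrite RtoC_opp; ring).
  rewrite poch_1, cexp_opp_ln_INR, fact_simpl, mult_INR by exact Hn.
  assert (INR n <> 0) by (apply not_0_INR; lia); pose proof (INR_fact_neq_0 n).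
  rewrite !RtoC_inv, RtoC_mult by assumption; field; split; apply RtoC_neq_0; assumption.
Qed.

Lemma rgamma_INR_S m : rgamma (INR (S m)) = RtoC (/ INR (fact m)).
Proof.
  induction m as [| m IH]; [simpl; rewrite Rinv_1; apply rgamma_1 |].
  pose proof (rgamma_S (INR (S m))) as H; rewrite IH in H.
  replace (INR (S m) + 1)%C with (RtoC (INR (S (S m)))) in H
    by (rewrite (S_INR (S m)), RtoC_plus; reflexivity).
  pose proof (INR_S_neq_0 m).
  rewrite fact_simpl, mult_INR, Rinv_mult, RtoC_mult, H, RtoC_inv by assumption.
  field; apply RtoC_neq_0; assumption.
Qed.

Lemma rgamma_poch c n : rgamma c = (poch c n * rgamma (c + INR n))%C.
Proof.
  induction n as [| n IH]; [simpl; rewrite Cplus_0_r; ring |].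
  rewrite IH, rgamma_S, poch_S, S_INR, RtoC_plus, Cplus_assoc; ring.
Qed.

Lemma Cmod_add_INR_lower c p : 2 * Cmod c + 1 <= INR p -> (INR p + 1) / 2 <= Cmod (c + INR p).
Proof.
  intros Hp; pose proof (Cmod_triangle (c + INR p) (- c)) as H.
  replace (c + INR p + - c)%C with (RtoC (INR p)) in H by ring.
  rewrite Cmod_R, Rabs_pos_eq, Cmod_opp in H by apply pos_INR; lra.
Qed.

Lemma rgamma_growth_step c p :
  (INR p + 1) / 2 <= Cmod (c + INR p) ->
  Cmod (rgamma (c + INR (S p))) * INR (fact (S p)) / 2 ^ S p <=
  Cmod (rgamma (c + INR p)) * INR (fact p) / 2 ^ p.
Proof.
  intros Hcp; rewrite (rgamma_S (c + INR p)), Cmod_mult.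
  replace (c + INR p + 1)%C with (c + INR (S p))%C by (rewrite S_INR, RtoC_plus; ring).
  set (r := Cmod (rgamma (c + INR (S p)))); assert (Hr : 0 <= r) by apply Cmod_ge_0.
  pose proof (INR_fact_lt_0 p); pose proof (pow_lt 2 p ltac:(lra)); pose proof (pos_INR p).
  rewrite fact_simpl, mult_INR, S_INR; simpl pow.
  replace (r * ((INR p + 1) * INR (fact p)) / (2 * 2 ^ p))
    with ((INR p + 1) / 2 * r * INR (fact p) / 2 ^ p) by (field; lra).
  unfold Rdiv; apply Rmult_le_compat_r; [left; apply Rinv_0_lt_compat; lra |].
  apply Rmult_le_compat_r; [lra |].
  apply Rmult_le_compat_r; [exact Hr | exact Hcp].
Qed.

Lemma rgamma_bound c :
  exists M, 0 <= M /\ forall p, Cmod (rgamma (c + INR p)) <= M * 2 ^ p / INR (fact p).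
Proof.
  set (f := fun p => Cmod (rgamma (c + INR p)) * INR (fact p) / 2 ^ p).
  assert (Hf0 : forall p, 0 <= f p).
  { intros p; unfold f; apply Rdiv_le_0_compat; [| apply pow_lt; lra].
    apply Rmult_le_pos; [apply Cmod_ge_0 | apply pos_INR]. }
  destruct (INR_unbounded (2 * Cmod c + 1)) as [p1 Hp1].
  set (M := rsum f (S p1)).
  assert (Hsmall : forall p, (p <= p1)%nat -> f p <= M).
  { intros p Hp; eapply Rle_trans; [| apply (rsum_le_mono f (S p) (S p1)); auto; lia].
    simpl; pose proof (rsum_nonneg f p ltac:(auto)); lra. }
  assert (Hlarge : forall d, f (p1 + d)%nat <= M).
  { induction d as [| d IH]; [rewrite Nat.add_0_r; apply Hsmall; lia |].
    eapply Rle_trans; [| exact IH]; rewrite Nat.add_succ_r; apply rgamma_growth_step.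
    apply Cmod_add_INR_lower; pose proof (le_INR p1 (p1 + d) ltac:(lia)); lra. }
  exists M; split; [apply rsum_nonneg; auto |]; intros p.
  assert (Hp : f p <= M).
  { destruct (le_lt_dec p p1); [apply Hsmall; assumption |].
    replace p with (p1 + (p - p1))%nat by lia; apply Hlarge. }
  unfold f in Hp; pose proof (INR_fact_lt_0 p); pose proof (pow_lt 2 p ltac:(lra)).
  apply Rmult_le_reg_r with (INR (fact p) / 2 ^ p); [apply Rdiv_lt_0_compat; lra |].
  replace (M * 2 ^ p / INR (fact p) * (INR (fact p) / 2 ^ p)) with M by (field; lra).
  unfold Rdiv in *; rewrite <- Rmult_assoc; exact Hp.
Qed.

(** * Binomial coefficients and Vandermonde convolutions *)

Fixpoint binom (n k : nat) : nat :=
  match n, k with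
  | _, O => 1%nat
  | O, S _ => 0%nat
  | S n', S k' => (binom n' k' + binom n' (S k'))%nat
  end.

Lemma binom_0 n : binom n 0 = 1%nat.
Proof. destruct n; reflexivity. Qed.

Lemma binom_gt n k : (n < k)%nat -> binom n k = 0%nat.
Proof.
  revert k; induction n as [| n IH]; intros [| k] H; simpl; try lia; try reflexivity.
  rewrite !IH by lia; reflexivity.
Qed.

Lemma binom_fact n k : (k <= n)%nat ->
  INR (binom n k) = INR (fact n) / (INR (fact k) * INR (fact (n - k))).
Proof.
  revert k; induction n as [| n IH]; intros k Hk.
  - replace k with 0%nat by lia; simpl; field.
  - destruct k as [| k].
    + rewrite binom_0, Nat.sub_0_r; simpl (fact 0); rewrite INR_1.
      field; apply INR_fact_neq_0.
    + simpl binom; rewrite plus_INR; simpl (S n - S k)%nat.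
      pose proof (INR_fact_neq_0 n); pose proof (INR_fact_neq_0 k).
      destruct (Nat.eq_dec k n) as [-> | Hkn].
      * rewrite (binom_gt n (S n)), IH, Nat.sub_diag by lia; simpl (fact 0).
        rewrite INR_1, INR_0; field; split; apply INR_fact_neq_0.
      * rewrite !IH by lia; replace (n - k)%nat with (S (n - S k)) by lia.
        pose proof (INR_fact_neq_0 (n - S k)).
        rewrite !fact_simpl, !mult_INR, !S_INR, minus_INR, !S_INR by lia.
        assert (INR k < INR n) by (apply lt_INR; lia); pose proof (pos_INR k).
        field; repeat split; lra.
Qed.

Lemma binom_sym n k : (k <= n)%nat -> binom n k = binom n (n - k).
Proof.
  intros H; apply INR_eq; rewrite !binom_fact by lia.
  replace (n - (n - k))%nat with k by lia; field; split; apply INR_fact_neq_0.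
Qed.

Definition binomC (n k : nat) : C := RtoC (INR (binom n k)).

Lemma binomC_0 n : binomC n 0 = 1.
Proof. unfold binomC; rewrite binom_0, INR_1; reflexivity. Qed.

Lemma binomC_S n k : binomC (S n) (S k) = (binomC n k + binomC n (S k))%C.
Proof. unfold binomC; simpl binom; rewrite plus_INR, RtoC_plus; reflexivity. Qed.

Lemma binomC_gt n k : (n < k)%nat -> binomC n k = 0.
Proof. intros H; unfold binomC; rewrite binom_gt by exact H; reflexivity. Qed.

Lemma vandermonde a c n :
  csum (fun m => binomC a m * binomC c (n - m))%C (S n) = binomC (a + c) n.
Proof.
  revert n; induction a as [| a IH]; intros n.
  - rewrite csum_first, binomC_0, Nat.sub_0_r, Nat.add_0_l, csum_eq_zero; [ring |].
    intros i _; rewrite binomC_gt by lia; ring.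
  - destruct n as [| n]; [simpl; rewrite !binomC_0; ring |].
    rewrite csum_first, binomC_0, Nat.sub_0_r.
    rewrite (csum_ext _ (fun m => binomC a m * binomC c (n - m)
                                  + binomC a (S m) * binomC c (S n - S m))%C)
      by (intros m _; rewrite binomC_S; simpl (S n - S m)%nat; ring).
    rewrite csum_plus, IH.
    pose proof (IH (S n)) as H; rewrite csum_first, binomC_0, Nat.sub_0_r in H.
    simpl (S a + c)%nat; rewrite binomC_S, <- H; ring.
Qed.

Lemma chu_vandermonde x y n :
  poch (x + y) n = csum (fun p => binomC n p * (poch x p * poch y (n - p)))%C (S n).
Proof.
  induction n as [| n IH]; [simpl; rewrite binomC_0; ring |].
  rewrite poch_S, IH, Cmult_comm, <- csum_scal.
  rewrite (csum_ext _ (fun p => binomC n p * (poch x (S p) * poch y (n - p))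
                              + binomC n p * (poch x p * poch y (S n - p)))%C).
  2: { intros p Hp; replace (S n - p)%nat with (S (n - p)) by lia.
       rewrite !poch_S, minus_INR, RtoC_minus by lia; ring. }
  rewrite csum_plus, (csum_first (fun p => binomC (S n) p * _)%C), binomC_0, Nat.sub_0_r.
  rewrite (csum_ext (fun q => binomC (S n) (S q) * (poch x (S q) * poch y (S n - S q)))%C
             (fun q => binomC n q * (poch x (S q) * poch y (n - q))
                     + binomC n (S q) * (poch x (S q) * poch y (n - q)))%C)
    by (intros q _; rewrite binomC_S; simpl (S n - S q)%nat; ring).
  rewrite csum_plus, (csum_first (fun p => binomC n p * (poch x p * poch y (S n - p)))%C).
  rewrite binomC_0, Nat.sub_0_r; simpl (S n - S _)%nat.
  change (csum ?f (S n)) with (csum f n + f n)%C at 3.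
  cbv beta; rewrite (binomC_gt n (S n)) by lia; ring.
Qed.

Lemma poch_reflect c m : poch c m = ((-1) ^ m * poch (RtoC (1 - INR m) - c) m)%C.
Proof.
  induction m as [| m IH]; [simpl; ring |].
  rewrite poch_S, IH, (poch_S_l (RtoC (1 - INR (S m)) - c) m).
  replace (RtoC (1 - INR (S m)) - c + 1)%C with (RtoC (1 - INR m) - c)%C
    by (rewrite S_INR, !RtoC_minus, RtoC_plus; ring).
  rewrite S_INR, (RtoC_minus 1 (INR m + 1)), RtoC_plus; simpl Cpow; ring.
Qed.

Lemma poch_INR_S a m : poch (INR a + 1) m = RtoC (INR (fact (a + m)) / INR (fact a)).
Proof.
  pose proof (INR_fact_neq_0 a).
  induction m as [| m IH]; [rewrite Nat.add_0_r; simpl; f_equal; field; assumption |].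
  rewrite poch_S, IH, Nat.add_succ_r, fact_simpl, mult_INR, S_INR, plus_INR.
  rewrite <- !RtoC_plus, <- RtoC_mult; f_equal; field; assumption.
Qed.

Lemma neg1_pow_add a b : ((-1) ^ a * (-1) ^ b)%C = ((-1) ^ (a + b))%C.
Proof. rewrite Cpow_add_r; reflexivity. Qed.

Lemma neg1_pow_sqr a : ((-1) ^ a * (-1) ^ a)%C = 1.
Proof.
  rewrite <- Cpow_mult_l; replace (-1 * -1)%C with (RtoC 1) by ring; apply Cpow_1_l.
Qed.

(* Both Pochhammer symbols reflect to (c-N)_p and (-c-N)_(N-p), and
   (-2N)_N = (-1)^N (N+1)_N. *)
Lemma reflected_chu_vandermonde c N :
  csum (fun p => binomC N p *
                 (poch (1 + c + INR p) (N - p) * poch (1 - c + INR (N - p)) p))%C (S N)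
  = RtoC (INR (fact (N + N)) / INR (fact N)).
Proof.
  rewrite (csum_ext _ (fun p => (-1) ^ N * (binomC N p *
             (poch (c - INR N) p * poch (- c - INR N) (N - p))))%C).
  2: { intros p Hp; rewrite (poch_reflect _ (N - p)), (poch_reflect _ p).
       replace (RtoC (1 - INR (N - p)) - (1 + c + INR p))%C with (- c - INR N)%C
         by (rewrite minus_INR, !RtoC_minus by lia; ring).
       replace (RtoC (1 - INR p) - (1 - c + INR (N - p)))%C with (c - INR N)%C
         by (rewrite minus_INR, !RtoC_minus by lia; ring).
       replace ((-1) ^ N)%C with ((-1) ^ (N - p) * (-1) ^ p)%C
         by (rewrite neg1_pow_add; f_equal; lia).
       ring. }
  rewrite csum_scal, <- chu_vandermonde, poch_reflect, <- poch_INR_S.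
  replace (RtoC (1 - INR N) - (c - INR N + (- c - INR N)))%C with (INR N + 1)%C
    by (rewrite !RtoC_minus; ring).
  rewrite Cmult_assoc, neg1_pow_sqr; ring.
Qed.

Lemma binomC_sym_central n k : (k <= n)%nat -> binomC (2 * n) (n + k) = binomC (2 * n) (n - k).
Proof. intros H; unfold binomC; rewrite binom_sym by lia; do 3 f_equal; lia. Qed.

(* Split 2 - delta_L0 as 1 + [L >= 1]: the two halves are the parts k <= p and k > p of
   Vandermonde's sum over k of C(2p,k) C(2q,p+q-k), via C(2n,n+L) = C(2n,n-L). *)
Lemma central_binom_convolution p q I : (p < I)%nat -> (q < I)%nat ->
  csum (fun L => if (L <=? Nat.min p q)%nat
                 then (RtoC (2 - deltaL0 L) * (binomC (2 * p) (p - L) * binomC (2 * q) (q - L)))%C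
                 else 0) I
  = binomC (2 * (p + q)) (p + q).
Proof.
  intros Hp Hq; set (b := fun L => (binomC (2 * p) (p - L) * binomC (2 * q) (q - L))%C).
  rewrite (csum_ext _ (fun L => (if (L <=? Nat.min p q)%nat then b L else 0)
                              + (if (L <=? Nat.min p q)%nat then
                                   if (1 <=? L)%nat then b L else 0 else 0))%C).
  2: { intros [| L] _; unfold deltaL0; destruct (_ <=? _)%nat; cbn -[binomC Nat.mul];
       unfold b; rewrite ?RtoC_minus; ring. }
  rewrite csum_plus.
  assert (Hlow : csum (fun L => if (L <=? Nat.min p q)%nat then b L else 0) I
                 = csum (fun m => binomC (2 * p) m * binomC (2 * q) (p + q - m))%C (S p)).
  { rewrite (csum_extend _ (S p) I),
      (csum_rev (fun m => binomC (2 * p) m * binomC (2 * q) (p + q - m))%C); [| lia |].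
    2: { intros L HL; destruct (Nat.leb_spec L (Nat.min p q)); [lia | reflexivity]. }
    apply csum_ext; intros L HL; replace (S p - 1 - L)%nat with (p - L)%nat by lia.
    replace (p + q - (p - L))%nat with (q + L)%nat by lia.
    destruct (Nat.leb_spec L (Nat.min p q)); unfold b.
    - rewrite binomC_sym_central by lia; reflexivity.
    - rewrite (binomC_gt (2 * q) (q + L)) by lia; ring. }
  assert (Hhigh : csum (fun L => if (L <=? Nat.min p q)%nat then
                                   if (1 <=? L)%nat then b L else 0 else 0) I
                  = csum (fun i => binomC (2 * p) (S p + i)
                                   * binomC (2 * q) (p + q - (S p + i)))%C q).
  { destruct I as [| I]; [lia |]; rewrite csum_first; simpl (1 <=? 0)%nat.
    rewrite (csum_extend _ q I); [| lia |].
    2: { intros i Hi; destruct (Nat.leb_spec (S i) (Nat.min p q)); [lia | reflexivity]. }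
    destruct (_ <=? _)%nat; rewrite Cplus_0_l; apply csum_ext; intros i Hi; simpl (1 <=? S i)%nat;
      replace (S p + i)%nat with (p + S i)%nat by lia;
      replace (p + q - (p + S i))%nat with (q - S i)%nat by lia;
      destruct (Nat.leb_spec (S i) (Nat.min p q)); unfold b.
    all: first [rewrite binomC_sym_central by lia; reflexivity
               | rewrite (binomC_gt (2 * p) (p + S i)) by lia; ring]. }
  rewrite Hlow, Hhigh, <- csum_split, vandermonde; f_equal; lia.
Qed.

Definition half_poch (L i : nat) : R :=
  INR (fact (2 * (L + i))) * INR (fact L) / (INR (fact (2 * L)) * INR (fact (L + i)) * 4 ^ i).

Lemma poch_half L i : poch (INR L + RtoC (1 / 2)) i = RtoC (half_poch L i).
Proof.
  unfold half_poch; pose proof (INR_fact_neq_0 (2 * L)).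
  induction i as [| i IH].
  - rewrite Nat.add_0_r; simpl poch; f_equal; simpl pow; field; split; auto using INR_fact_neq_0.
  - rewrite poch_S, IH; replace (2 * (L + S i))%nat with (S (S (2 * (L + i)))) by lia.
    replace (L + S i)%nat with (S (L + i)) by lia.
    rewrite !(fact_simpl (S _)), !fact_simpl, !mult_INR, !S_INR, mult_INR, plus_INR.
    rewrite <- !RtoC_plus, <- RtoC_mult; f_equal; simpl pow.
    pose proof (INR_fact_neq_0 (L + i)); pose proof (pos_INR L); pose proof (pos_INR i).
    simpl (INR 2); field; repeat split; try lra; apply pow_nonzero; lra.
Qed.

(** * Coefficients of the double series *)

Definition hyp_term (as_ bs : list C) (z : C) (n : nat) : C :=
  (fold_right Cmult (RtoC 1) (map (fun a => poch a n) as_)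
   * fold_right Cmult (RtoC 1) (map (fun b => rgamma (b + INR n)) bs)
   * (pow_n z n / INR (fact n)))%C.

(* The second 1F~2 factor of the statement, with [Cminus _ mu], is [f12_term k (- mu) L]
   by conversion, since [Cminus a b] unfolds to [a + - b]. *)
Definition f12_term (k c : C) (L : nat) : nat -> C :=
  hyp_term [(INR L + RtoC (1 / 2))%C] [RtoC (INR (2 * L + 1)); (RtoC (INR L + 1) + c)%C]
           (- (k * k / RtoC 4))%C.

Definition outer_coef (k : C) (L : nat) : C :=
  (pow_n (RtoC (-1)) (2 * L) * pow_n k (4 * L) * RtoC (INR (fact (2 * L)) ^ 2)
   * RtoC (/ 2 ^ (8 * L) * (2 - deltaL0 L)) / RtoC (INR (fact L) ^ 2))%C.

Definition f23_term (k mu : C) : nat -> C :=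
  hyp_term [RtoC (1 / 2); RtoC (1 / 2)] [RtoC 1; (RtoC 1 - mu)%C; (mu + RtoC 1)%C] (- (k * k))%C.

Definition f12_weight (L i : nat) : R :=
  half_poch L i / (INR (fact (2 * L + i)) * INR (fact i) * 4 ^ i).

Definition outer_weight (L : nat) : R :=
  INR (fact (2 * L)) ^ 2 * (/ 2 ^ (8 * L) * (2 - deltaL0 L)) / INR (fact L) ^ 2.

Definition triple_weight (L i j : nat) : R :=
  (2 - deltaL0 L) * INR (binom (2 * (L + i)) i) * INR (binom (2 * (L + j)) j)
  / (INR (fact (L + i)) * INR (fact (L + j)) * 16 ^ (2 * L + i + j)).

Definition f23_weight (N : nat) : R := INR (binom (2 * N) N) ^ 2 / 16 ^ N.

Lemma pow_n_Cpow (z : C) n : pow_n z n = (z ^ n)%C.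
Proof. induction n as [| n IH]; simpl; [reflexivity | rewrite IH; reflexivity]. Qed.

Lemma rgamma_INR_add a b : rgamma (RtoC (INR (a + 1)) + INR b) = RtoC (/ INR (fact (a + b))).
Proof.
  rewrite <- RtoC_plus, <- plus_INR, <- rgamma_INR_S; do 3 f_equal; lia.
Qed.

Lemma f12_term_nf k c L i :
  f12_term k c L i = ((- (k * k)) ^ i * f12_weight L i * rgamma (1 + c + INR (L + i)))%C.
Proof.
  unfold f12_term, hyp_term, f12_weight; cbn [map fold_right].
  rewrite poch_half, rgamma_INR_add, pow_n_Cpow.
  replace (- (k * k / RtoC 4))%C with (- (k * k) * RtoC (/ 4))%C
    by (rewrite RtoC_inv by lra; field; apply RtoC_neq_0; lra).
  replace (RtoC (INR L + 1) + c + INR i)%C with (1 + c + INR (L + i))%C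
    by (rewrite plus_INR, !RtoC_plus; ring).
  pose proof (INR_fact_neq_0 (2 * L + i)); pose proof (INR_fact_neq_0 i).
  assert (4 ^ i <> 0) by (apply pow_nonzero; lra).
  rewrite Cpow_mult_l, <- RtoC_pow, pow_inv, RtoC_div, !RtoC_inv, !RtoC_mult
    by (repeat apply Rmult_integral_contrapositive_currified; assumption).
  field; repeat split; apply RtoC_neq_0; assumption.
Qed.

Lemma outer_coef_nf k L : outer_coef k L = ((- (k * k)) ^ (2 * L) * outer_weight L)%C.
Proof.
  unfold outer_coef, outer_weight; rewrite (pow_n_Cpow k), (pow_n_Cpow (RtoC (-1))).
  replace ((-1) ^ (2 * L))%C with (RtoC 1)
    by (rewrite Cpow_mult_r; replace ((-1) ^ 2)%C with (RtoC 1) by ring; rewrite Cpow_1_l; auto).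
  replace (k ^ (4 * L))%C with ((- (k * k)) ^ (2 * L))%C
    by (rewrite !Cpow_mult_r; f_equal; simpl; ring).
  pose proof (pow_nonzero (INR (fact L)) 2 (INR_fact_neq_0 L)).
  rewrite RtoC_div, !RtoC_mult by assumption; field; apply RtoC_neq_0; assumption.
Qed.

Lemma f23_weight_eq N : half_poch 0 N * half_poch 0 N / INR (fact N) ^ 2 = f23_weight N.
Proof.
  unfold half_poch, f23_weight; rewrite binom_fact by lia.
  replace (2 * N - N)%nat with N by lia; simpl (2 * 0)%nat; simpl (fact 0); rewrite Nat.add_0_l.
  replace 16 with (4 * 4) by ring; rewrite Rpow_mult_distr.
  pose proof (INR_fact_neq_0 N); assert (4 ^ N <> 0) by (apply pow_nonzero; lra).
  simpl INR; field; auto.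
Qed.

Lemma f23_term_nf k mu N :
  f23_term k mu N =
  ((- (k * k)) ^ N * f23_weight N * (rgamma (1 + mu + INR N) * rgamma (1 - mu + INR N)))%C.
Proof.
  unfold f23_term, hyp_term; cbn [map fold_right].
  replace (RtoC (1 / 2)) with (INR 0 + RtoC (1 / 2))%C by (simpl; ring).
  rewrite poch_half, <- f23_weight_eq, pow_n_Cpow.
  replace (RtoC 1 + INR N)%C with (RtoC (INR (S N))) by (rewrite S_INR, RtoC_plus; ring).
  replace (mu + RtoC 1 + INR N)%C with (1 + mu + INR N)%C by ring.
  rewrite rgamma_INR_S; pose proof (INR_fact_neq_0 N).
  rewrite RtoC_div, RtoC_inv, !RtoC_mult, RtoC_pow by (try apply pow_nonzero; assumption).
  field; apply RtoC_neq_0; assumption.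
Qed.

Lemma weight_product L i j :
  outer_weight L * f12_weight L i * f12_weight L j = triple_weight L i j.
Proof.
  unfold outer_weight, f12_weight, half_poch, triple_weight; rewrite !binom_fact by lia.
  replace (2 * (L + i) - i)%nat with (2 * L + i)%nat by lia.
  replace (2 * (L + j) - j)%nat with (2 * L + j)%nat by lia.
  replace (2 ^ (8 * L)) with (16 ^ (2 * L)) by (rewrite !pow_mult; f_equal; ring).
  replace 16 with (4 * 4) by ring; rewrite !Rpow_mult_distr, !pow_add.
  pose proof (INR_fact_neq_0 (2 * L)); pose proof (INR_fact_neq_0 L).
  pose proof (INR_fact_neq_0 (L + i)); pose proof (INR_fact_neq_0 (L + j)).
  pose proof (INR_fact_neq_0 (2 * L + i)); pose proof (INR_fact_neq_0 (2 * L + j)).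
  pose proof (INR_fact_neq_0 i); pose proof (INR_fact_neq_0 j).
  assert (forall n, 4 ^ n <> 0) by (intros; apply pow_nonzero; lra).
  field; repeat split; auto.
Qed.

Definition triple_term (k mu : C) (L i j : nat) : C :=
  (outer_coef k L * (f12_term k mu L i * f12_term k (- mu) L j))%C.

Lemma triple_term_nf k mu L i j :
  triple_term k mu L i j =
  ((- (k * k)) ^ (2 * L + i + j) * triple_weight L i j
   * (rgamma (1 + mu + INR (L + i)) * rgamma (1 - mu + INR (L + j))))%C.
Proof.
  unfold triple_term; rewrite outer_coef_nf, !f12_term_nf, <- weight_product.
  change (1 + - mu)%C with (1 - mu)%C; rewrite !Cpow_add_r, !RtoC_mult; ring.
Qed.

Lemma diagonal_reindex (G : nat -> nat -> nat -> C) N I : (N < I)%nat ->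
  csum (fun L => csum (fun i => csum (fun j =>
          if (2 * L + i + j =? N)%nat then G L i j else 0) I) I) I
  = csum (fun p => csum (fun L =>
          if (L <=? Nat.min p (N - p))%nat then G L (p - L)%nat (N - p - L)%nat else 0) I) (S N).
Proof.
  intros HI.
  rewrite (csum_ext _ (fun L => csum (fun p => if (p <=? N)%nat then
             if (L <=? Nat.min p (N - p))%nat then G L (p - L)%nat (N - p - L)%nat else 0
             else 0) I)).
  2: { intros L HL; rewrite (csum_ext _ (fun i => if (2 * L + i <=? N)%nat
                                               then G L i (N - (2 * L + i))%nat else 0))
         by (intros i _; apply csum_indicator_eq, HI).
       rewrite (csum_shift_indicator _ I L); [| lia |].
       2: { intros i Hi; rewrite leb_correct_conv by lia; reflexivity. }
       apply csum_ext; intros p _.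
       destruct (Nat.leb_spec L p), (Nat.leb_spec p N), (Nat.leb_spec (2 * L + (p - L)) N),
                (Nat.leb_spec L (Nat.min p (N - p))); try lia; try reflexivity.
       f_equal; lia. }
  rewrite csum_swap, (csum_extend _ (S N) I); [| lia |].
  - apply csum_ext; intros p Hp; rewrite leb_correct by lia; reflexivity.
  - intros p Hp; rewrite leb_correct_conv by lia; apply csum_zero.
Qed.

Lemma rgamma_shift_to c p N : (p <= N)%nat ->
  rgamma (c + INR p) = (poch (c + INR p) (N - p) * rgamma (c + INR N))%C.
Proof.
  intros H; rewrite (rgamma_poch _ (N - p)), minus_INR, RtoC_minus by exact H.
  do 2 f_equal; ring.
Qed.

Lemma binomial_sum_rgamma mu N :
  csum (fun p => binomC N p * (rgamma (1 + mu + INR p) * rgamma (1 - mu + INR (N - p))))%C (S N)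
  = (RtoC (INR (fact (N + N)) / INR (fact N))
     * (rgamma (1 + mu + INR N) * rgamma (1 - mu + INR N)))%C.
Proof.
  rewrite <- (reflected_chu_vandermonde mu N), Cmult_comm, <- csum_scal.
  apply csum_ext; intros p Hp.
  rewrite (rgamma_shift_to (1 + mu) p N), (rgamma_shift_to (1 - mu) (N - p) N) by lia.
  replace (N - (N - p))%nat with p by lia; ring.
Qed.

Lemma triple_weight_diag L p N : (L <= Nat.min p (N - p))%nat -> (p <= N)%nat ->
  triple_weight L (p - L) (N - p - L) =
  (2 - deltaL0 L) * INR (binom (2 * p) (p - L)) * INR (binom (2 * (N - p)) (N - p - L))
  / (INR (fact p) * INR (fact (N - p)) * 16 ^ N).
Proof.
  intros HL Hp; unfold triple_weight.
  replace (L + (p - L))%nat with p by lia.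
  replace (L + (N - p - L))%nat with (N - p)%nat by lia.
  replace (2 * L + (p - L) + (N - p - L))%nat with N by lia; reflexivity.
Qed.

Lemma triple_weight_sum p N I : (p <= N)%nat -> (N < I)%nat ->
  csum (fun L => if (L <=? Nat.min p (N - p))%nat
                 then RtoC (triple_weight L (p - L) (N - p - L)) else 0) I
  = RtoC (INR (binom (2 * N) N) / (INR (fact p) * INR (fact (N - p)) * 16 ^ N)).
Proof.
  intros Hp HN.
  set (D := / (INR (fact p) * INR (fact (N - p)) * 16 ^ N)).
  transitivity (RtoC D * csum (fun L => if (L <=? Nat.min p (N - p))%nat then
       (RtoC (2 - deltaL0 L) * (binomC (2 * p) (p - L) * binomC (2 * (N - p)) (N - p - L)))%C
       else 0) I)%C.
  - rewrite <- csum_scal; apply csum_ext; intros L _.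
    destruct (Nat.leb_spec L (Nat.min p (N - p))); [| ring].
    rewrite triple_weight_diag by lia; unfold binomC, D, Rdiv; rewrite !RtoC_mult; ring.
  - rewrite central_binom_convolution by lia.
    replace (p + (N - p))%nat with N by lia; unfold binomC, D, Rdiv; rewrite RtoC_mult; ring.
Qed.

Lemma diagonal_sum k mu N I : (N < I)%nat ->
  csum (fun L => csum (fun i => csum (fun j =>
          if (2 * L + i + j =? N)%nat then triple_term k mu L i j else 0) I) I) I
  = f23_term k mu N.
Proof.
  intros HI; set (A := fun p => rgamma (1 + mu + INR p)).
  set (B := fun q => rgamma (1 - mu + INR q)).
  set (w := (INR (binom (2 * N) N) / (INR (fact N) * 16 ^ N))).
  transitivity ((- (k * k)) ^ N
                  * csum (fun p => RtoC w * (binomC N p * (A p * B (N - p)%nat))) (S N))%C.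
  - rewrite <- csum_scal, <- (csum_ext (fun L => csum (fun i => csum (fun j =>
        if (2 * L + i + j =? N)%nat then ((- (k * k)) ^ N
          * (RtoC (triple_weight L i j) * (A (L + i)%nat * B (L + j)%nat)))%C else 0) I) I)).
    2: { intros L _; apply csum_ext; intros i _; apply csum_ext; intros j _.
         destruct (Nat.eqb_spec (2 * L + i + j) N) as [<- |]; [| reflexivity].
         rewrite triple_term_nf; unfold A, B; ring. }
    rewrite diagonal_reindex by exact HI; apply csum_ext; intros p Hp.
    rewrite (csum_ext _ (fun L => (((- (k * k)) ^ N * (A p * B (N - p)%nat)) *
       (if (L <=? Nat.min p (N - p))%nat
         then RtoC (triple_weight L (p - L) (N - p - L)) else 0))%C)).
    2: { intros L _; destruct (Nat.leb_spec L (Nat.min p (N - p))); [| ring].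
         replace (L + (p - L))%nat with p by lia.
         replace (L + (N - p - L))%nat with (N - p)%nat by lia.
         ring. }
    rewrite csum_scal, triple_weight_sum by lia.
    unfold w, binomC; rewrite (binom_fact N p) by lia.
    pose proof (INR_fact_neq_0 N); pose proof (INR_fact_neq_0 p).
    pose proof (INR_fact_neq_0 (N - p)).
    assert (16 ^ N <> 0) by (apply pow_nonzero; lra).
    rewrite !RtoC_div by (repeat apply Rmult_integral_contrapositive_currified; assumption).
    rewrite !RtoC_mult; field; repeat split; apply RtoC_neq_0; assumption.
  - rewrite csum_scal; unfold A, B; rewrite binomial_sum_rgamma, f23_term_nf.
    unfold w, f23_weight.
    replace (N + N)%nat with (2 * N)%nat by lia.
    assert (Hb : INR (binom (2 * N) N) = INR (fact (2 * N)) / (INR (fact N) * INR (fact N)))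
      by (rewrite binom_fact by lia; replace (2 * N - N)%nat with N by lia; reflexivity).
    rewrite Hb; pose proof (INR_fact_neq_0 N); assert (16 ^ N <> 0) by (apply pow_nonzero; lra).
    rewrite !RtoC_div, !RtoC_pow, !RtoC_div, !RtoC_mult
      by (repeat apply Rmult_integral_contrapositive_currified; assumption).
    rewrite RtoC_pow; field; repeat split; try apply Cpow_nz; apply RtoC_neq_0; lra || assumption.
Qed.

(** * Absolute convergence estimates *)

Lemma binom_le_pow n k : INR (binom n k) <= 2 ^ n.
Proof.
  revert k; induction n as [| n IH]; intros [| k]; simpl binom.
  - simpl; lra.
  - simpl; lra.
  - rewrite INR_1; apply pow_R1_Rle; lra.
  - rewrite plus_INR; simpl pow; pose proof (IH k); pose proof (IH (S k)); lra.
Qed.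

Lemma fact_ge_1 n : 1 <= INR (fact n).
Proof. apply (le_INR 1), lt_O_fact. Qed.

Lemma fact_mul_le m n : INR (fact m) * INR (fact n) <= INR (fact (m + n)).
Proof.
  rewrite <- mult_INR; apply le_INR; induction n as [| n IH]; [rewrite Nat.add_0_r; simpl; lia |].
  rewrite Nat.add_succ_r, !fact_simpl; nia.
Qed.

Lemma fact_triple_le L i j :
  INR (fact L) * INR (fact i) * INR (fact j) <= INR (fact (L + i)) * INR (fact (L + j)).
Proof.
  pose proof (fact_mul_le L i); pose proof (fact_mul_le L j); pose proof (fact_ge_1 L).
  pose proof (fact_ge_1 i); pose proof (fact_ge_1 j).
  apply Rmult_le_compat; try nra.
Qed.

Lemma fact_double_le n : INR (fact (2 * n)) <= 4 ^ n * INR (fact n) ^ 2.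
Proof.
  pose proof (binom_le_pow (2 * n) n) as H; rewrite binom_fact in H by lia.
  replace (2 * n - n)%nat with n in H by lia; rewrite pow_mult in H.
  pose proof (INR_fact_lt_0 n).
  apply (Rmult_le_compat_r (INR (fact n) * INR (fact n))) in H; [| nra].
  replace (INR (fact (2 * n)) / (INR (fact n) * INR (fact n)) * (INR (fact n) * INR (fact n)))
    with (INR (fact (2 * n))) in H by (field; lra).
  replace (2 ^ 2) with 4 in H by ring; lra.
Qed.

Lemma deltaL0_bounds L : 1 <= 2 - deltaL0 L <= 2.
Proof. unfold deltaL0; destruct (L =? 0)%nat; lra. Qed.

Lemma triple_weight_bound L i j :
  0 <= triple_weight L i j <= 2 / (4 ^ (2 * L + i + j) * (INR (fact (L + i)) * INR (fact (L + j)))).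
Proof.
  unfold triple_weight; set (N := (2 * L + i + j)%nat).
  set (P := INR (fact (L + i))); set (Q := INR (fact (L + j))).
  assert (HPQ : 0 < P * Q) by (apply Rmult_lt_0_compat; apply INR_fact_lt_0).
  assert (H4 : 0 < 4 ^ N) by (apply pow_lt; lra).
  assert (Hden : 16 ^ N = 4 ^ N * 4 ^ N) by (rewrite <- Rpow_mult_distr; f_equal; ring).
  assert (Hnum : 0 <= (2 - deltaL0 L) * INR (binom (2 * (L + i)) i) * INR (binom (2 * (L + j)) j)
                 <= 2 * 4 ^ N).
  { pose proof (deltaL0_bounds L); pose proof (pos_INR (binom (2 * (L + i)) i)).
    pose proof (pos_INR (binom (2 * (L + j)) j)).
    pose proof (binom_le_pow (2 * (L + i)) i); pose proof (binom_le_pow (2 * (L + j)) j).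
    replace (4 ^ N) with (2 ^ (2 * (L + i)) * 2 ^ (2 * (L + j)))
      by (rewrite <- pow_add; replace (2 * (L + i) + 2 * (L + j))%nat with (2 * N)%nat
            by (unfold N; lia); rewrite pow_mult; f_equal; ring).
    split; [repeat apply Rmult_le_pos; lra |].
    rewrite Rmult_assoc; apply Rmult_le_compat; try lra; [nra |].
    apply Rmult_le_compat; lra. }
  assert (Hpos : 0 < P * Q * (4 ^ N * 4 ^ N))
      by (apply Rmult_lt_0_compat; [exact HPQ | apply Rmult_lt_0_compat; exact H4]).
  rewrite Hden; split.
  - apply Rdiv_le_0_compat; lra.
  - apply Rmult_le_reg_r with (P * Q * (4 ^ N * 4 ^ N)); [exact Hpos |].
    unfold Rdiv; rewrite Rmult_assoc, Rinv_l by lra.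
    assert (P <> 0) by apply INR_fact_neq_0; assert (Q <> 0) by apply INR_fact_neq_0.
    replace (2 * / (4 ^ N * (P * Q)) * (P * Q * (4 ^ N * 4 ^ N))) with (2 * 4 ^ N)
      by (field; repeat split; lra).
    lra.
Qed.

Lemma half_poch_bound L i :
  0 <= half_poch L i <= 4 ^ L * INR (fact (L + i)) * INR (fact L) / INR (fact (2 * L)).
Proof.
  unfold half_poch; pose proof (fact_double_le (L + i)) as Hd; rewrite pow_add in Hd.
  pose proof (INR_fact_lt_0 (L + i)); pose proof (INR_fact_lt_0 L).
  pose proof (INR_fact_lt_0 (2 * L)); pose proof (INR_fact_lt_0 (2 * (L + i))).
  assert (0 < 4 ^ i) by (apply pow_lt; lra); assert (0 < 4 ^ L) by (apply pow_lt; lra).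
  assert (Hden : 0 < INR (fact (2 * L)) * INR (fact (L + i)) * 4 ^ i)
    by (repeat apply Rmult_lt_0_compat; lra).
  split; [apply Rdiv_le_0_compat; nra |].
  apply Rmult_le_reg_r with (INR (fact (2 * L)) * INR (fact (L + i)) * 4 ^ i); [exact Hden |].
  replace (INR (fact (2 * (L + i))) * INR (fact L)
             / (INR (fact (2 * L)) * INR (fact (L + i)) * 4 ^ i)
           * (INR (fact (2 * L)) * INR (fact (L + i)) * 4 ^ i))
    with (INR (fact (2 * (L + i))) * INR (fact L)) by (field; repeat split; lra).
  replace (4 ^ L * INR (fact (L + i)) * INR (fact L) / INR (fact (2 * L))
           * (INR (fact (2 * L)) * INR (fact (L + i)) * 4 ^ i))
    with (4 ^ L * 4 ^ i * INR (fact (L + i)) ^ 2 * INR (fact L)) by (field; lra).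
  apply Rmult_le_compat_r; lra.
Qed.

Lemma f12_weight_bound L i :
  0 <= f12_weight L i
  <= 4 ^ L * INR (fact (L + i)) * INR (fact L) / INR (fact (2 * L)) / (INR (fact i) * 4 ^ i).
Proof.
  unfold f12_weight; pose proof (half_poch_bound L i) as [H0 H1].
  pose proof (fact_ge_1 (2 * L + i)); pose proof (INR_fact_lt_0 i).
  assert (0 < 4 ^ i) by (apply pow_lt; lra).
  assert (Hd : 0 < INR (fact i) * 4 ^ i) by (apply Rmult_lt_0_compat; lra).
  split; [apply Rdiv_le_0_compat; [exact H0 | nra] |].
  apply Rle_trans with (half_poch L i / (INR (fact i) * 4 ^ i)).
  - unfold Rdiv; apply Rmult_le_compat_l; [exact H0 |].
    apply Rinv_le_contravar; [exact Hd | nra].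
  - unfold Rdiv; apply Rmult_le_compat_r; [left; apply Rinv_0_lt_compat, Hd | exact H1].
Qed.

Lemma f23_weight_bound N : 0 <= f23_weight N <= 1.
Proof.
  unfold f23_weight; pose proof (binom_le_pow (2 * N) N); pose proof (pos_INR (binom (2 * N) N)).
  assert (H16 : 0 < 16 ^ N) by (apply pow_lt; lra).
  split; [apply Rdiv_le_0_compat; [apply pow_le |]; lra |].
  apply Rmult_le_reg_r with (16 ^ N); [exact H16 |].
  unfold Rdiv; rewrite Rmult_assoc, Rinv_l, Rmult_1_r, Rmult_1_l by lra.
  replace (16 ^ N) with ((2 ^ (2 * N)) ^ 2)
    by (rewrite <- !pow_mult; replace 16 with (2 ^ 4) by ring; rewrite <- pow_mult; f_equal; lia).
  apply pow_incr; lra.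
Qed.

Definition f12_scale (M : R) (L : nat) : R :=
  4 ^ L * INR (fact L) / INR (fact (2 * L)) * M * 2 ^ L.

Lemma f12_scale_nonneg M L : 0 <= M -> 0 <= f12_scale M L.
Proof.
  intros HM; unfold f12_scale, Rdiv.
  pose proof (INR_fact_lt_0 (2 * L)); pose proof (pos_INR (fact L)).
  assert (0 < 4 ^ L) by (apply pow_lt; lra); assert (0 < 2 ^ L) by (apply pow_lt; lra).
  repeat apply Rmult_le_pos; try lra; left; apply Rinv_0_lt_compat; lra.
Qed.

Lemma f12_term_bound k c M L i :
  0 <= M -> (forall p, Cmod (rgamma (1 + c + INR p)) <= M * 2 ^ p / INR (fact p)) ->
  Cmod (f12_term k c L i) <= f12_scale M L * ((Cmod (k * k) / 2) ^ i / INR (fact i)).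
Proof.
  intros HM HA; set (a := Cmod (k * k)); assert (Ha : 0 <= a) by apply Cmod_ge_0.
  rewrite f12_term_nf, !Cmod_mult, Cmod_pow, Cmod_opp, Cmod_R; fold a.
  pose proof (f12_weight_bound L i) as [W0 W1]; rewrite Rabs_pos_eq by exact W0.
  pose proof (INR_fact_lt_0 (L + i)); pose proof (INR_fact_lt_0 (2 * L)).
  pose proof (INR_fact_lt_0 i).
  assert (0 < 2 ^ i) by (apply pow_lt; lra).
  apply Rle_trans with (a ^ i * (4 ^ L * INR (fact (L + i)) * INR (fact L) / INR (fact (2 * L))
                                 / (INR (fact i) * 4 ^ i))
                                   * (M * 2 ^ (L + i) / INR (fact (L + i)))).
  - apply Rmult_le_compat; try apply Cmod_ge_0; [| | exact (HA (L + i)%nat)].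
    + apply Rmult_le_pos; [apply pow_le, Ha | exact W0].
    + apply Rmult_le_compat_l; [apply pow_le, Ha | exact W1].
  - assert (E4 : 4 ^ i = 2 ^ i * 2 ^ i) by (rewrite <- Rpow_mult_distr; f_equal; ring).
    replace ((a / 2) ^ i) with (a ^ i / 2 ^ i)
      by (unfold Rdiv; rewrite Rpow_mult_distr, pow_inv; reflexivity).
    unfold f12_scale; rewrite pow_add, E4.
    right; field; repeat split; lra.
Qed.

Section TripleSeries.

Variables (k mu : C) (MA MB : R).
Hypotheses (HMA : 0 <= MA) (HMB : 0 <= MB)
  (HA : forall p, Cmod (rgamma (1 + mu + INR p)) <= MA * 2 ^ p / INR (fact p))
  (HB : forall q, Cmod (rgamma (1 - mu + INR q)) <= MB * 2 ^ q / INR (fact q)).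

Lemma triple_term_bound L i j :
  2 ^ (2 * L + i + j) * Cmod (triple_term k mu L i j) <=
  2 * MA * MB * ((Cmod (k * k) ^ 2) ^ L / INR (fact L)
                 * (Cmod (k * k) ^ i / INR (fact i) * (Cmod (k * k) ^ j / INR (fact j)))).
Proof.
  set (a := Cmod (k * k)); assert (Ha : 0 <= a) by apply Cmod_ge_0.
  rewrite triple_term_nf, !Cmod_mult, Cmod_pow, Cmod_opp, Cmod_R; fold a.
  pose proof (triple_weight_bound L i j) as [W0 W1]; rewrite Rabs_pos_eq by exact W0.
  set (N := (2 * L + i + j)%nat) in *.
  set (P := INR (fact (L + i))) in *; set (Q := INR (fact (L + j))) in *.
  assert (HP : 1 <= P) by apply fact_ge_1; assert (HQ : 1 <= Q) by apply fact_ge_1.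
  assert (H2 : 0 < 2 ^ N) by (apply pow_lt; lra); assert (HaN : 0 <= a ^ N) by (apply pow_le, Ha).
  assert (HAB : Cmod (rgamma (1 + mu + INR (L + i))) * Cmod (rgamma (1 - mu + INR (L + j)))
                <= MA * MB * 2 ^ N / (P * Q)).
  { replace (MA * MB * 2 ^ N / (P * Q)) with (MA * 2 ^ (L + i) / P * (MB * 2 ^ (L + j) / Q))
      by (unfold N; replace (2 * L + i + j)%nat with ((L + i) + (L + j))%nat by lia;
          rewrite (pow_add 2 (L + i) (L + j)); field; split; lra).
    apply Rmult_le_compat; try apply Cmod_ge_0; [apply HA | apply HB]. }
  assert (Hfact : INR (fact L) * INR (fact i) * INR (fact j) <= (P * Q) * (P * Q))
    by (pose proof (fact_triple_le L i j) as Hf; fold P Q in Hf;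
        assert (1 <= P * Q) by nra; nra).
  pose proof (INR_fact_lt_0 L); pose proof (INR_fact_lt_0 i); pose proof (INR_fact_lt_0 j).
  apply Rle_trans with (2 * MA * MB * a ^ N / ((P * Q) * (P * Q))).
  - rewrite (Rmult_assoc (a ^ N)); replace (2 * MA * MB * a ^ N / (P * Q * (P * Q)))
      with (2 ^ N * (a ^ N * (2 / (4 ^ N * (P * Q)) * (MA * MB * 2 ^ N / (P * Q)))))
      by (replace 4 with (2 * 2) by ring; rewrite Rpow_mult_distr; field; repeat split; lra).
    apply Rmult_le_compat_l; [lra |]; apply Rmult_le_compat_l; [exact HaN |].
    apply Rmult_le_compat; try lra; apply Rmult_le_pos; apply Cmod_ge_0.
  - replace ((a ^ 2) ^ L / INR (fact L) * (a ^ i / INR (fact i) * (a ^ j / INR (fact j))))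
      with (a ^ N / (INR (fact L) * INR (fact i) * INR (fact j)))
      by (unfold N; rewrite <- pow_mult, !pow_add; field; repeat split; lra).
    unfold Rdiv; rewrite <- !(Rmult_assoc (2 * MA * MB)).
    apply Rmult_le_compat_l; [repeat apply Rmult_le_pos; lra |].
    apply Rinv_le_contravar; [repeat apply Rmult_lt_0_compat; lra | exact Hfact].
Qed.

Lemma f23_term_bound N :
  Cmod (f23_term k mu N) <= MA * MB * ((4 * Cmod (k * k)) ^ N / INR (fact N)).
Proof.
  set (a := Cmod (k * k)); assert (Ha : 0 <= a) by apply Cmod_ge_0.
  rewrite f23_term_nf, !Cmod_mult, Cmod_pow, Cmod_opp, Cmod_R; fold a.
  pose proof (f23_weight_bound N) as [T0 T1]; rewrite Rabs_pos_eq by exact T0.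
  pose proof (fact_ge_1 N); assert (0 < 2 ^ N) by (apply pow_lt; lra).
  assert (HaN : 0 <= a ^ N) by (apply pow_le, Ha).
  apply Rle_trans with (a ^ N * 1 * (MA * 2 ^ N / INR (fact N) * (MB * 2 ^ N / INR (fact N)))).
  - apply Rmult_le_compat; [apply Rmult_le_pos; lra | apply Rmult_le_pos; apply Cmod_ge_0 | |].
    + apply Rmult_le_compat_l; lra.
    + apply Rmult_le_compat; try apply Cmod_ge_0; [apply HA | apply HB].
  - rewrite Rpow_mult_distr; replace (4 ^ N) with (2 ^ N * 2 ^ N)
      by (rewrite <- Rpow_mult_distr; f_equal; ring).
    replace (a ^ N * 1 * (MA * 2 ^ N / INR (fact N) * (MB * 2 ^ N / INR (fact N))))
      with (MA * MB * (2 ^ N * 2 ^ N * a ^ N / INR (fact N)) * / INR (fact N)) by (field; lra).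
    assert (0 <= MA * MB * (2 ^ N * 2 ^ N * a ^ N / INR (fact N)))
      by (apply Rmult_le_pos; [nra | apply Rdiv_le_0_compat; nra]).
    assert (/ INR (fact N) <= 1) by (rewrite <- Rinv_1; apply Rinv_le_contravar; lra).
    nra.
Qed.

Lemma f23_partial_sum N0 I : (N0 <= I)%nat ->
  csum (f23_term k mu) N0 =
  csum (fun L => csum (fun i => csum (fun j =>
    if (2 * L + i + j <? N0)%nat then triple_term k mu L i j else 0) I) I) I.
Proof.
  intros HI; rewrite (csum_ext _ (fun N => csum (fun L => csum (fun i => csum (fun j =>
      if (2 * L + i + j =? N)%nat then triple_term k mu L i j else 0) I) I) I))
    by (intros N HN; symmetry; apply diagonal_sum; lia).
  rewrite csum_swap; apply csum_ext; intros L _; rewrite csum_swap; apply csum_ext; intros i _.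
  rewrite csum_swap; apply csum_ext; intros j _; apply csum_indicator_lt.
Qed.

Lemma box_sub_f23_partial_sum M I : (2 * M <= I)%nat ->
  (csum (fun L => csum (fun i => csum (fun j => triple_term k mu L i j) I) I) M
   - csum (f23_term k mu) (2 * M))%C =
  csum (fun L => csum (fun i => csum (fun j =>
    (if (L <? M)%nat then triple_term k mu L i j else 0)
    - (if (2 * L + i + j <? 2 * M)%nat then triple_term k mu L i j else 0))%C I) I) I.
Proof.
  intros HI; rewrite (f23_partial_sum (2 * M) I HI), (csum_truncate _ M I) by lia.
  rewrite <- csum_minus; apply csum_ext; intros L _.
  transitivity (csum (fun i => csum (fun j =>
                  if (L <? M)%nat then triple_term k mu L i j else 0) I) I
                - csum (fun i => csum (fun j =>
                  if (2 * L + i + j <? 2 * M)%nat then triple_term k mu L i j else 0) I) I)%C.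
  - destruct (L <? M)%nat; [reflexivity |].
    rewrite (csum_eq_zero (fun _ => csum (fun _ => 0) I) I) by (intros; apply csum_zero).
    reflexivity.
  - rewrite <- csum_minus; apply csum_ext; intros i _; symmetry; apply csum_minus.
Qed.

(* A term survives only if L < M <= (2L+i+j)/2, and then 2^(2L+i+j) >= 4^M. *)
Lemma box_term_bound M L i j :
  Cmod ((if (L <? M)%nat then triple_term k mu L i j else 0)
        - (if (2 * L + i + j <? 2 * M)%nat then triple_term k mu L i j else 0))
  <= (/ 4) ^ M * (2 * MA * MB) * ((Cmod (k * k) ^ 2) ^ L / INR (fact L)
       * (Cmod (k * k) ^ i / INR (fact i) * (Cmod (k * k) ^ j / INR (fact j)))).
Proof.
  rewrite Rmult_assoc; pose proof (triple_term_bound L i j) as HW.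
  set (W := triple_term k mu L i j) in *.
  set (Bd := 2 * MA * MB * _) in *.
  assert (H2 : 0 < 2 ^ (2 * L + i + j)) by (apply pow_lt; lra).
  assert (H4 : 0 < (/ 4) ^ M) by (apply pow_lt; lra).
  assert (HBd : 0 <= Bd) by (pose proof (Cmod_ge_0 W); nra).
  destruct (Nat.ltb_spec L M), (Nat.ltb_spec (2 * L + i + j) (2 * M)); try lia.
  - replace (W - W)%C with (RtoC 0) by ring; rewrite Cmod_0; nra.
  - replace (W - 0)%C with W by ring.
    assert (Hq : 1 <= (/ 4) ^ M * 2 ^ (2 * L + i + j)).
    { rewrite pow_inv; replace (4 ^ M) with (2 ^ (2 * M)) by (rewrite pow_mult; f_equal; ring).
      assert (2 ^ (2 * M) <= 2 ^ (2 * L + i + j)) by (apply Rle_pow; lra || lia).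
      assert (0 < 2 ^ (2 * M)) by (apply pow_lt; lra).
      apply Rmult_le_reg_l with (2 ^ (2 * M)); [lra |].
      rewrite <- Rmult_assoc, Rinv_r by lra; lra. }
    apply Rle_trans with ((/ 4) ^ M * 2 ^ (2 * L + i + j) * Cmod W);
      [pose proof (Cmod_ge_0 W); nra |].
    rewrite Rmult_assoc; apply Rmult_le_compat_l; lra.
  - replace (0 - 0)%C with (RtoC 0) by ring; rewrite Cmod_0; nra.
Qed.

Definition tail_const : R :=
  2 * MA * MB * (exp (Cmod (k * k) ^ 2) * (exp (Cmod (k * k)) * exp (Cmod (k * k)))).

Lemma tail_const_nonneg : 0 <= tail_const.
Proof.
  unfold tail_const; pose proof (exp_pos (Cmod (k * k) ^ 2)); pose proof (exp_pos (Cmod (k * k))).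
  apply Rmult_le_pos; [repeat apply Rmult_le_pos; lra |].
  apply Rmult_le_pos; [lra | apply Rmult_le_pos; lra].
Qed.

Lemma box_bound M I : (2 * M <= I)%nat ->
  Cmod (csum (fun L => csum (fun i => csum (fun j => triple_term k mu L i j) I) I) M
        - csum (f23_term k mu) (2 * M))
  <= (/ 4) ^ M * tail_const.
Proof.
  intros HI; rewrite box_sub_f23_partial_sum by exact HI; unfold tail_const.
  set (a := Cmod (k * k)); assert (Ha : 0 <= a) by apply Cmod_ge_0.
  set (e := fun (x : R) n => x ^ n / INR (fact n)).
  assert (He : forall x n, 0 <= x -> 0 <= e x n)
    by (intros; apply Rdiv_le_0_compat; [apply pow_le | apply INR_fact_lt_0]; assumption).
  eapply Rle_trans.
  { apply Cmod_csum. }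
  eapply Rle_trans.
  { apply rsum_le; intros L _; eapply Rle_trans; [apply Cmod_csum |].
    apply rsum_le; intros i _; eapply Rle_trans; [apply Cmod_csum |].
    apply rsum_le; intros j _; apply box_term_bound. }
  fold a; change (rsum (fun L => rsum (fun i => rsum (fun j =>
      (/ 4) ^ M * (2 * MA * MB) * (e (a ^ 2) L * (e a i * e a j))) I) I) I
    <= (/ 4) ^ M * (2 * MA * MB * (exp (a ^ 2) * (exp a * exp a)))).
  rewrite rsum_triple_product, Rmult_assoc.
  assert (Ha2 : 0 <= a ^ 2) by (apply pow_le, Ha).
  pose proof (rsum_exp (a ^ 2) I Ha2); pose proof (rsum_exp a I Ha).
  assert (0 <= rsum (e (a ^ 2)) I) by (apply rsum_nonneg; intros; apply He, Ha2).
  assert (0 <= rsum (e a) I) by (apply rsum_nonneg; intros; apply He, Ha).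
  apply Rmult_le_compat_l; [left; apply pow_lt; lra |].
  apply Rmult_le_compat_l; [nra |].
  apply Rmult_le_compat; try assumption; [apply Rmult_le_pos; assumption |].
  apply Rmult_le_compat; assumption.
Qed.

Lemma f12_series_cv c L M :
  0 <= M -> (forall p, Cmod (rgamma (1 + c + INR p)) <= M * 2 ^ p / INR (fact p)) ->
  Ccv (csum (f12_term k c L)) (CSeries (f12_term k c L)).
Proof.
  intros HM Hc; apply (Ccv_CSeries_exp _ (f12_scale M L) (Cmod (k * k) / 2)).
  - apply f12_scale_nonneg, HM.
  - pose proof (Cmod_ge_0 (k * k)); lra.
  - intros i; apply f12_term_bound; assumption.
Qed.

Lemma f23_series_cv : Ccv (csum (f23_term k mu)) (CSeries (f23_term k mu)).
Proof.
  apply (Ccv_CSeries_exp _ (MA * MB) (4 * Cmod (k * k))).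
  - apply Rmult_le_pos; assumption.
  - pose proof (Cmod_ge_0 (k * k)); lra.
  - apply f23_term_bound.
Qed.

Definition outer_term (L : nat) : C :=
  (outer_coef k L * (CSeries (f12_term k mu L) * CSeries (f12_term k (- mu) L)))%C.

Lemma box_cv L :
  Ccv (fun I => csum (fun i => csum (fun j => triple_term k mu L i j) I) I) (outer_term L).
Proof.
  eapply Ccv_ext; [| apply Ccv_scal, Ccv_mult;
                     [apply (f12_series_cv mu L MA) | apply (f12_series_cv (- mu) L MB)];
                     assumption].
  exists 0%nat; intros I _; rewrite csum_mult, <- csum_scal; apply csum_ext; intros i _.
  rewrite <- csum_scal; reflexivity.
Qed.

Lemma outer_partial_sum_bound M :
  Cmod (csum outer_term M - csum (f23_term k mu) (2 * M))
  <= (/ 4) ^ M * tail_const.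
Proof.
  apply (Ccv_le (fun I => csum (fun L => csum (fun i => csum (fun j =>
           triple_term k mu L i j) I) I) M) _ _ _ (2 * M)).
  - apply Ccv_csum; intros L _; apply box_cv.
  - intros I HI; apply box_bound, HI.
Qed.

Lemma outer_series : is_series outer_term (CSeries (f23_term k mu)).
Proof.
  apply Ccv_is_series; intros eps Heps.
  destruct (pow_inv4_eventually_lt tail_const (eps / 2) tail_const_nonneg) as [M1 HM1]; [lra |].
  destruct (f23_series_cv (eps / 2)) as [M2 HM2]; [lra |].
  exists (M1 + M2)%nat; intros n Hn; rewrite sum_n_csum.
  pose proof (outer_partial_sum_bound (S n)); specialize (HM1 (S n) ltac:(lia)).
  specialize (HM2 (2 * S n)%nat ltac:(lia)).
  pose proof (Cmod_sub_triangle (csum outer_term (S n)) (csum (f23_term k mu) (2 * S n))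
                (CSeries (f23_term k mu))).
  lra.
Qed.

End TripleSeries.

Theorem mainTheorem2 (k mu : C) :
  is_series
    (fun L : nat =>
       Cmult
         (Cdiv
            (Cmult (Cmult (Cmult (pow_n (RtoC (-1)) (2 * L)) (pow_n k (4 * L)))
                          (RtoC (INR (Factorial.fact (2 * L)) ^ 2)))
                   (RtoC (/ 2 ^ (8 * L) * (2 - deltaL0 L))))
            (RtoC (INR (Factorial.fact L) ^ 2)))
         (Cmult
            (hyp_reg [Cplus (RtoC (INR L)) (RtoC (1/2))]
                     [RtoC (INR (2 * L + 1)); Cplus (RtoC (INR L + 1)) mu]
                     (Copp (Cdiv (Cmult k k) (RtoC 4))))
            (hyp_reg [Cplus (RtoC (INR L)) (RtoC (1/2))]
                     [RtoC (INR (2 * L + 1)); Cminus (RtoC (INR L + 1)) mu]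
                     (Copp (Cdiv (Cmult k k) (RtoC 4))))))
    (hyp_reg [RtoC (1/2); RtoC (1/2)]
             [RtoC 1; Cminus (RtoC 1) mu; Cplus mu (RtoC 1)]
             (Copp (Cmult k k))).
Proof.
  destruct (rgamma_bound (1 + mu)) as [MA [HMA HA]].
  destruct (rgamma_bound (1 - mu)) as [MB [HMB HB]].
  exact (outer_series k mu MA MB HMA HMB HA HB).
Qed.
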